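(* For any symmetric CQ channel $W$ with input alphabet $\mathbb Z_d$, $I(W)+I(W^\perp)=\log d$, where $I(W):=\max_{P_Z}\big(H(Z)-H(Z|W(Z))\big)$ is the Holevo (classical) capacity.
   Context: A CQ channel $W$ assigns to each $z\in\mathbb Z_d$ a density operator $W(z)$ on a finite-dimensional Hilbert space; it is symmetric if there are unitaries $U_z$ with $U_{z'}W(z)U_{z'}^*=W(z+z')$. $H(Z|W(Z))$ is the von Neumann conditional entropy of the CQ state $\sum_zP_Z(z)|z\rangle\langle z|\otimes W(z)$. Conjugate basis $|\tilde x\rangle=d^{-1/2}\sum_z\omega^{xz}|z\rangle$, $\omega=e^{2\pi i/d}$. Dual channel: purifications $|\varphi_z\rangle_{BD}$ of $W(z)$, isometry $V|z\rangle_A=|z\rangle_C|\varphi_z\rangle_{BD}$ ($\mathcal H_C\cong\mathbb C^d$), $|\theta_x\rangle=V|\tilde x\rangle_A$, $W^\perp(x)=\mathrm{Tr}_B|\theta_x\rangle\langle\theta_x|$. *)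

(* classical reals; finite-dimensional complex linear algebra is
   developed by hand (complex numbers as pairs of reals, matrices as functions
   nat -> nat -> C whose entries below the stated dimension are relevant). *)
From Stdlib Require Import Reals Lra Lia Arith ClassicalEpsilon.
Open Scope R_scope.

Definition C : Type := (R * R)%type.
Definition Cre (z : C) : R := fst z.
Definition Cim (z : C) : R := snd z.
Definition RtoC (x : R) : C := (x, 0).
Definition C0 : C := (0, 0).
Definition C1 : C := (1, 0).
Definition Cadd (a b : C) : C := (fst a + fst b, snd a + snd b).
Definition Cmul (a b : C) : C :=
  (fst a * fst b - snd a * snd b, fst a * snd b + snd a * fst b).
Definition Cconj (a : C) : C := (fst a, - snd a).
Definition Cexpi (t : R) : C := (cos t, sin t).

Fixpoint csum (n : nat) (f : nat -> C) : C :=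
  match n with O => C0 | S k => Cadd (csum k f) (f k) end.
Fixpoint rsum (n : nat) (f : nat -> R) : R :=
  match n with O => 0 | S k => rsum k f + f k end.

Definition Mat : Type := nat -> nat -> C.
Definition Vec : Type := nat -> C.

Definition meq (n : nat) (A B : Mat) : Prop :=
  forall i j, (i < n)%nat -> (j < n)%nat -> A i j = B i j.
Definition mmul (n : nat) (A B : Mat) : Mat :=
  fun i j => csum n (fun k => Cmul (A i k) (B k j)).
Definition adj (A : Mat) : Mat := fun i j => Cconj (A j i).
Definition idm : Mat := fun i j => if Nat.eqb i j then C1 else C0.
Definition diagm (lam : nat -> R) : Mat :=
  fun i j => if Nat.eqb i j then RtoC (lam i) else C0.
Definition mtrace (n : nat) (A : Mat) : C := csum n (fun i => A i i).
Definition outer (v : Vec) : Mat := fun i j => Cmul (v i) (Cconj (v j)).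

Definition unitary (n : nat) (U : Mat) : Prop :=
  meq n (mmul n U (adj U)) idm /\ meq n (mmul n (adj U) U) idm.

Definition density (n : nat) (rho : Mat) : Prop :=
  (forall i j, (i < n)%nat -> (j < n)%nat -> rho i j = Cconj (rho j i)) /\
  (forall v : Vec,
     0 <= Cre (csum n (fun i => csum n (fun j =>
               Cmul (Cconj (v i)) (Cmul (rho i j) (v j)))))) /\
  mtrace n rho = C1.

(* tensor conventions: index of (i,j) in C^a (x) C^b is i*b+j *)
Definition ptr1 (a b : nat) (M : Mat) : Mat :=
  fun i j => csum a (fun k => M (k * b + i)%nat (k * b + j)%nat).
Definition ptr2 (a b : nat) (M : Mat) : Mat :=
  fun i j => csum b (fun k => M (i * b + k)%nat (j * b + k)%nat).
(* partial trace over the middle factor of C^a (x) C^b (x) C^c;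
   result lives on C^a (x) C^c *)
Definition ptr_mid (a b c : nat) (M : Mat) : Mat :=
  fun i j => csum b (fun k =>
    M (((i / c) * b + k) * c + i mod c)%nat (((j / c) * b + k) * c + j mod c)%nat).

(* von Neumann entropy (natural log): -sum_i lam_i ln lam_i over the spectrum,
   obtained from a spectral decomposition rho = U diag(lam) U^*.
   (0 * ln 0 = 0 automatically.) *)
Definition vN_entropy (n : nat) (rho : Mat) : R :=
  epsilon (inhabits 0) (fun s => exists (U : Mat) (lam : nat -> R),
    unitary n U /\ meq n rho (mmul n (mmul n U (diagm lam)) (adj U)) /\
    s = - rsum n (fun i => lam i * ln (lam i))).

Definition prob (d : nat) (P : nat -> R) : Prop :=
  (forall z, (z < d)%nat -> 0 <= P z) /\ rsum d P = 1.

Definition shannon (d : nat) (P : nat -> R) : R :=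
  - rsum d (fun z => P z * ln (P z)).

Definition cq_channel (d n : nat) (W : nat -> Mat) : Prop :=
  forall z, (z < d)%nat -> density n (W z).

Definition symmetric_channel (d n : nat) (W : nat -> Mat) : Prop :=
  exists Us : nat -> Mat,
    (forall z, (z < d)%nat -> unitary n (Us z)) /\
    forall z z', (z < d)%nat -> (z' < d)%nat ->
      meq n (mmul n (mmul n (Us z') (W z)) (adj (Us z'))) (W ((z + z') mod d)%nat).

(* CQ state sum_z P(z) |z><z| (x) W(z) on C^d (x) C^n *)
Definition cq_state (n : nat) (P : nat -> R) (W : nat -> Mat) : Mat :=
  fun i j => if Nat.eqb (i / n)%nat (j / n)%nat
             then Cmul (RtoC (P (i / n)%nat)) (W (i / n)%nat (i mod n)%nat (j mod n)%nat)
             else C0.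

(* H(Z|W(Z)) = S(rho_ZB) - S(rho_B) *)
Definition cond_entropy (d n : nat) (W : nat -> Mat) (P : nat -> R) : R :=
  vN_entropy (d * n) (cq_state n P W) - vN_entropy n (ptr1 d n (cq_state n P W)).

(* the values H(Z) - H(Z|W(Z)) over input distributions; I(W) is their max *)
Definition holevo_values (d n : nat) (W : nat -> Mat) (r : R) : Prop :=
  exists P, prob d P /\ r = shannon d P - cond_entropy d n W P.

(* phi z : purification of W z on C^n (x) C^m (B (x) D) *)
Definition purification (n m : nat) (rho : Mat) (v : Vec) : Prop :=
  meq n (ptr2 n m (outer v)) rho.

(* |theta_x> = V |x~> = d^{-1/2} sum_z w^{xz} |z>_C |phi_z>_BD,
   a vector on C^d (x) C^n (x) C^m *)
Definition theta (d n m : nat) (phi : nat -> Vec) (x : nat) : Vec :=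
  fun idx => let z := (idx / (n * m))%nat in
    Cmul (RtoC (/ sqrt (INR d)))
      (Cmul (Cexpi (2 * PI * INR x * INR z / INR d)) (phi z (idx mod (n * m))%nat)).

(* W^perp(x) = Tr_B |theta_x><theta_x|, an operator on C^d (x) C^m *)
Definition dual_channel (d n m : nat) (phi : nat -> Vec) : nat -> Mat :=
  fun x => ptr_mid d n m (outer (theta d n m phi x)).

(* For a symmetric channel, averaging the outputs of any input mixture over
   the covariance unitaries gives the uniform mixture Wbar, so by unitary
   invariance and concavity of the entropy the Holevo quantity is maximised by
   the uniform input: I(W) = S(Wbar) - S(W(0)).  The dual channel is symmetric
   too, under the phases Z^x (x) 1 on C (x) D, so likewise
   I(W^perp) = S(Wbar^perp) - S(W^perp(0)).  Writing W^perp(0) = Y Y^*, the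
   matrix Y^T conj(Y) is Wbar (this is where the purifications enter), and
   X X^*, X^T conj(X) always have the same nonzero spectrum; hence
   S(W^perp(0)) = S(Wbar).  Averaging W^perp over Z_d kills the blocks between
   different values of C, leaving the CQ state (1/d) sum_c |c><c| (x) Tr_B
   |phi_c><phi_c|, of entropy log d + S(W(0)) since each Tr_B |phi_c><phi_c|
   has the spectrum of W(c). *)

From Pilot Require Import Defs.
From Stdlib Require Import Reals Lra Lia Arith ClassicalEpsilon FunctionalExtensionality.
From mathcomp Require all_boot all_order all_algebra complex Rstruct.
Import Defs.
Open Scope R_scope.

Lemma Ceq (a b : C) : fst a = fst b -> snd a = snd b -> a = b.
Proof. destruct a, b; simpl; intros -> ->; reflexivity. Qed.

Ltac cunfold := unfold Cadd, Cmul, Cconj, RtoC, C0, C1, Cre, Cim, Cexpi in *; simpl in *.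
Ltac cring := apply Ceq; cunfold; ring.

Lemma Cmul_comm a b : Cmul a b = Cmul b a. Proof. cring. Qed.
Lemma Cmul_assoc a b c : Cmul (Cmul a b) c = Cmul a (Cmul b c). Proof. cring. Qed.
Lemma Cmul_1_l a : Cmul C1 a = a. Proof. cring. Qed.
Lemma Cmul_add_l a b c : Cmul (Cadd a b) c = Cadd (Cmul a c) (Cmul b c). Proof. cring. Qed.
Lemma Cconj_conj a : Cconj (Cconj a) = a. Proof. cring. Qed.
Lemma Cconj_mul a b : Cconj (Cmul a b) = Cmul (Cconj a) (Cconj b). Proof. cring. Qed.
Lemma RtoC_mul r s : RtoC (r * s) = Cmul (RtoC r) (RtoC s). Proof. cring. Qed.

Definition Cnorm2 (z : C) : R := fst z * fst z + snd z * snd z.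

Lemma Cnorm2_ge0 z : 0 <= Cnorm2 z. Proof. unfold Cnorm2; nra. Qed.
Lemma Cmul_conj_r z : Cmul z (Cconj z) = RtoC (Cnorm2 z). Proof. unfold Cnorm2; cring. Qed.
Lemma Cmul_conj_l z : Cmul (Cconj z) z = RtoC (Cnorm2 z). Proof. unfold Cnorm2; cring. Qed.
Lemma Cnorm2_mul a b : Cnorm2 (Cmul a b) = Cnorm2 a * Cnorm2 b.
Proof. unfold Cnorm2; cunfold; ring. Qed.
Lemma Cnorm2_RtoC r : Cnorm2 (RtoC r) = r * r. Proof. unfold Cnorm2; cunfold; ring. Qed.
Lemma Cnorm2_conj a : Cnorm2 (Cconj a) = Cnorm2 a. Proof. unfold Cnorm2; cunfold; ring. Qed.

Lemma Cexpi_add a b : Cmul (Cexpi a) (Cexpi b) = Cexpi (a + b).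
Proof. apply Ceq; cunfold; [rewrite cos_plus | rewrite sin_plus]; ring. Qed.
Lemma Cexpi_0 : Cexpi 0 = C1.
Proof. apply Ceq; cunfold; [rewrite cos_0 | rewrite sin_0]; ring. Qed.
Lemma Cexpi_conj a : Cconj (Cexpi a) = Cexpi (- a).
Proof. apply Ceq; cunfold; [rewrite cos_neg | rewrite sin_neg]; ring. Qed.
Lemma Cnorm2_Cexpi a : Cnorm2 (Cexpi a) = 1.
Proof. unfold Cnorm2; cunfold. pose proof (sin2_cos2 a) as E. unfold Rsqr in E. lra. Qed.
Lemma Cexpi_2PI_nat k : Cexpi (2 * PI * INR k) = C1.
Proof.
  apply Ceq; cunfold.
  - rewrite <- cos_0, <- (cos_period 0 k). f_equal; ring.
  - rewrite <- sin_0, <- (sin_period 0 k). f_equal; ring.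
Qed.

Lemma csum_ext n f g : (forall k, (k < n)%nat -> f k = g k) -> csum n f = csum n g.
Proof. induction n; intros H; simpl; [reflexivity|]. rewrite IHn, H; auto. Qed.
Lemma csum_add n f g : csum n (fun k => Cadd (f k) (g k)) = Cadd (csum n f) (csum n g).
Proof. induction n; simpl; [cring|]. rewrite IHn. cring. Qed.
Lemma csum_mul_l n c f : csum n (fun k => Cmul c (f k)) = Cmul c (csum n f).
Proof. induction n; simpl; [cring|]. rewrite IHn. cring. Qed.
Lemma csum_mul_r n c f : csum n (fun k => Cmul (f k) c) = Cmul (csum n f) c.
Proof. induction n; simpl; [cring|]. rewrite IHn. cring. Qed.
Lemma csum_conj n f : Cconj (csum n f) = csum n (fun k => Cconj (f k)).
Proof. induction n; simpl; [cring|]. rewrite <- IHn. cring. Qed.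
Lemma csum_eq0 n f : (forall k, (k < n)%nat -> f k = C0) -> csum n f = C0.
Proof. induction n; intros H; simpl; [reflexivity|]. rewrite IHn, H; auto. cring. Qed.
Lemma csum_swap n m f :
  csum n (fun i => csum m (fun j => f i j)) = csum m (fun j => csum n (fun i => f i j)).
Proof.
  induction n; simpl.
  - symmetry; apply csum_eq0; auto.
  - rewrite IHn, <- csum_add. reflexivity.
Qed.
Lemma csum_delta n i f : (i < n)%nat ->
  csum n (fun k => if Nat.eqb k i then f k else C0) = f i.
Proof.
  induction n; intros H; [lia|]. simpl.
  destruct (Nat.eqb_spec n i).
  - subst. rewrite csum_eq0. cring. intros k hk. destruct (Nat.eqb_spec k i); [lia|auto].
  - rewrite IHn by lia. cring.
Qed.
Lemma csum_delta' n i f : (i < n)%nat ->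
  csum n (fun k => if Nat.eqb i k then f k else C0) = f i.
Proof.
  intros H. rewrite <- (csum_delta n i f H). apply csum_ext. intros k _.
  rewrite Nat.eqb_sym. reflexivity.
Qed.
Lemma csum_plus n m f : csum (n + m) f = Cadd (csum n f) (csum m (fun k => f (n + k)%nat)).
Proof.
  induction m; simpl. rewrite Nat.add_0_r; cring.
  rewrite Nat.add_succ_r; simpl. rewrite IHm. cring.
Qed.
Lemma csum_pair a b f : csum (a * b) f = csum a (fun i => csum b (fun j => f (i * b + j)%nat)).
Proof.
  induction a; simpl; [reflexivity|].
  replace (b + a * b)%nat with (a * b + b)%nat by lia.
  rewrite csum_plus, IHa. reflexivity.
Qed.
Lemma csum_rot1 n f : (0 < n)%nat -> csum n (fun x => f (S x mod n)%nat) = csum n f.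
Proof.
  intros hn. destruct n as [|n]; [lia|].
  change (csum (S n) (fun x => f (S x mod S n)%nat))
    with (Cadd (csum n (fun x => f (S x mod S n)%nat)) (f (S n mod S n)%nat)).
  rewrite (csum_ext n _ (fun k => f (S k))).
  2:{ intros k hk. rewrite Nat.mod_small by lia. reflexivity. }
  rewrite Nat.Div0.mod_same.
  replace (csum (S n) f) with (csum (1 + n) f) by reflexivity.
  rewrite csum_plus. cring.
Qed.
Lemma csum_rot n z f : (0 < n)%nat -> csum n (fun x => f ((z + x) mod n)%nat) = csum n f.
Proof.
  intros hn. induction z.
  - apply csum_ext; intros. rewrite Nat.mod_small by lia. reflexivity.
  - rewrite <- IHz, <- (csum_rot1 n (fun y => f ((z + y) mod n)%nat) hn).
    apply csum_ext; intros x hx. f_equal.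
    rewrite Nat.Div0.add_mod_idemp_r. f_equal. lia.
Qed.

Lemma rsum_ext n f g : (forall k, (k < n)%nat -> f k = g k) -> rsum n f = rsum n g.
Proof. induction n; intros H; simpl; [reflexivity|]. rewrite IHn, H; auto. Qed.
Lemma rsum_add n f g : rsum n (fun k => f k + g k) = rsum n f + rsum n g.
Proof. induction n; simpl; [ring|]. rewrite IHn. ring. Qed.
Lemma rsum_opp n f : rsum n (fun k => - f k) = - rsum n f.
Proof. induction n; simpl; [ring|]. rewrite IHn. ring. Qed.
Lemma rsum_mul_l n c f : rsum n (fun k => c * f k) = c * rsum n f.
Proof. induction n; simpl; [ring|]. rewrite IHn. ring. Qed.
Lemma rsum_mul_r n c f : rsum n (fun k => f k * c) = rsum n f * c.
Proof. induction n; simpl; [ring|]. rewrite IHn. ring. Qed.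
Lemma rsum_const n c : rsum n (fun _ => c) = INR n * c.
Proof. induction n; simpl rsum; [simpl; ring|]. rewrite IHn, S_INR. ring. Qed.
Lemma rsum_swap n m f :
  rsum n (fun i => rsum m (fun j => f i j)) = rsum m (fun j => rsum n (fun i => f i j)).
Proof.
  induction n; simpl.
  - rewrite rsum_const; simpl; ring.
  - rewrite IHn, <- rsum_add. reflexivity.
Qed.
Lemma rsum_le n f g : (forall k, (k < n)%nat -> f k <= g k) -> rsum n f <= rsum n g.
Proof.
  induction n; intros H; simpl; [lra|].
  apply Rplus_le_compat; [apply IHn; intros k hk|]; apply H; lia.
Qed.
Lemma rsum_ge0 n f : (forall k, (k < n)%nat -> 0 <= f k) -> 0 <= rsum n f.
Proof.
  intros H. replace 0 with (rsum n (fun _ => 0)) by (rewrite rsum_const; ring).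
  apply rsum_le; auto.
Qed.
Lemma rsum_ge_term n f j : (forall k, (k < n)%nat -> 0 <= f k) -> (j < n)%nat ->
  f j <= rsum n f.
Proof.
  induction n; intros H hj; [lia|]. simpl.
  assert (0 <= rsum n f) by (apply rsum_ge0; intros; apply H; lia).
  destruct (Nat.eq_dec j n) as [->|]; [lra|].
  assert (f j <= rsum n f) by (apply IHn; [intros; apply H|]; lia).
  assert (0 <= f n) by (apply H; lia). lra.
Qed.
Lemma rsum_eq0_inv n f : (forall k, (k < n)%nat -> 0 <= f k) -> rsum n f = 0 ->
  forall k, (k < n)%nat -> f k = 0.
Proof.
  intros H E k hk. pose proof (rsum_ge_term n f k H hk). specialize (H k hk). lra.
Qed.
Lemma rsum_plus n m f : rsum (n + m) f = rsum n f + rsum m (fun k => f (n + k)%nat).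
Proof.
  induction m; simpl. rewrite Nat.add_0_r; ring.
  rewrite Nat.add_succ_r; simpl. rewrite IHm. ring.
Qed.
Lemma rsum_pair a b f : rsum (a * b) f = rsum a (fun i => rsum b (fun j => f (i * b + j)%nat)).
Proof.
  induction a; simpl; [reflexivity|].
  replace (b + a * b)%nat with (a * b + b)%nat by lia.
  rewrite rsum_plus, IHa. reflexivity.
Qed.
Lemma rsum_delta n i f : (i < n)%nat ->
  rsum n (fun k => f k * (if Nat.eqb k i then 1 else 0)) = f i.
Proof.
  induction n; intros H; [lia|]. simpl.
  destruct (Nat.eqb_spec n i).
  - subst. rewrite (rsum_ext _ _ (fun _ => 0)), rsum_const. ring.
    intros k hk. destruct (Nat.eqb_spec k i); [lia|ring].
  - rewrite IHn by lia. ring.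
Qed.
Lemma csum_RtoC n f : csum n (fun k => RtoC (f k)) = RtoC (rsum n f).
Proof. induction n; simpl; [reflexivity|]. rewrite IHn. cring. Qed.

Lemma pair_div z k n : (k < n)%nat -> ((z * n + k) / n = z)%nat.
Proof. intros. symmetry. apply (Nat.div_unique _ _ _ k); lia. Qed.
Lemma pair_mod z k n : (k < n)%nat -> ((z * n + k) mod n = k)%nat.
Proof. intros. symmetry. apply (Nat.mod_unique _ _ z); lia. Qed.
Lemma div_lt_pair i d n : (i < d * n)%nat -> (i / n < d)%nat.
Proof. intros. apply Nat.Div0.div_lt_upper_bound. lia. Qed.
Lemma mod_lt_pair i n : (0 < n)%nat -> (i mod n < n)%nat.
Proof. intros. apply Nat.mod_upper_bound. lia. Qed.
Lemma div_mod_inj i j n : (i / n = j / n)%nat -> (i mod n = j mod n)%nat -> i = j.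
Proof.
  intros. rewrite (Nat.div_mod_eq i n), (Nat.div_mod_eq j n). lia.
Qed.

Definition meq_on (r c : nat) (A B : Mat) : Prop :=
  forall i j, (i < r)%nat -> (j < c)%nat -> A i j = B i j.

Lemma meq_on_refl r c A : meq_on r c A A. Proof. intros i j _ _; reflexivity. Qed.
Lemma meq_on_sym r c A B : meq_on r c A B -> meq_on r c B A.
Proof. intros H i j hi hj; symmetry; auto. Qed.
Lemma meq_on_trans r c A B D : meq_on r c A B -> meq_on r c B D -> meq_on r c A D.
Proof. intros H1 H2 i j hi hj; rewrite H1; auto. Qed.
Arguments meq_on_trans {r c A B D}.
Arguments meq_on_sym {r c A B}.

Lemma mmul_meq_on a p c A A' B B' :
  meq_on a p A A' -> meq_on p c B B' -> meq_on a c (mmul p A B) (mmul p A' B').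
Proof. intros HA HB i j hi hj. unfold mmul. apply csum_ext. intros k hk. rewrite HA, HB; auto. Qed.
Arguments mmul_meq_on {a p c A A' B B'}.

Lemma mtrace_meq n A B : meq n A B -> mtrace n A = mtrace n B.
Proof. intros H. unfold mtrace. apply csum_ext; intros. apply H; auto. Qed.

Lemma mmul_assoc p q A B D : mmul q (mmul p A B) D = mmul p A (mmul q B D).
Proof.
  do 2 (apply functional_extensionality; intro). unfold mmul.
  rewrite (csum_ext _ _ (fun k => csum p (fun l => Cmul (A x l) (Cmul (B l k) (D k x0))))).
  2:{ intros k _. rewrite <- csum_mul_r. apply csum_ext; intros; apply Cmul_assoc. }
  rewrite csum_swap. apply csum_ext; intros. apply csum_mul_l.
Qed.
Lemma adj_mmul p A B : adj (mmul p A B) = mmul p (adj B) (adj A).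
Proof.
  do 2 (apply functional_extensionality; intro). unfold adj, mmul.
  rewrite csum_conj. apply csum_ext; intros. rewrite Cconj_mul. apply Cmul_comm.
Qed.
Lemma adj_adj A : adj (adj A) = A.
Proof. do 2 (apply functional_extensionality; intro). apply Cconj_conj. Qed.
Lemma adj_diagm lam : adj (diagm lam) = diagm lam.
Proof.
  do 2 (apply functional_extensionality; intro). unfold adj, diagm.
  rewrite Nat.eqb_sym. destruct (Nat.eqb_spec x x0); [subst|]; cring.
Qed.

Lemma mmul_idm_l a c A : meq_on a c (mmul a idm A) A.
Proof.
  intros i j hi _. unfold mmul, idm. rewrite <- (csum_delta' a i (fun k => A k j)) by auto.
  apply csum_ext. intros k _. destruct (Nat.eqb i k); cring.
Qed.
Lemma mmul_idm_r r a A : meq_on r a (mmul a A idm) A.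
Proof.
  intros i j _ hj. unfold mmul, idm. rewrite <- (csum_delta a j (fun k => A i k)) by auto.
  apply csum_ext. intros k _. destruct (Nat.eqb k j); cring.
Qed.
Lemma mmul_diagm_r n lam A i j : (j < n)%nat ->
  mmul n A (diagm lam) i j = Cmul (A i j) (RtoC (lam j)).
Proof.
  intros hj. unfold mmul, diagm.
  rewrite <- (csum_delta n j (fun k => Cmul (A i k) (RtoC (lam k)))) by auto.
  apply csum_ext. intros k _. destruct (Nat.eqb_spec k j); [subst; auto | cring].
Qed.

Lemma mmul_adj_diag p A i : mmul p A (adj A) i i = RtoC (rsum p (fun k => Cnorm2 (A i k))).
Proof.
  unfold mmul, adj. rewrite <- csum_RtoC. apply csum_ext; intros. apply Cmul_conj_r.
Qed.

Lemma unitary_mmul n U V : unitary n U -> unitary n V -> unitary n (mmul n U V).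
Proof.
  intros [U1 U2] [V1 V2]. split.
  - rewrite adj_mmul, mmul_assoc, <- (mmul_assoc n n V).
    apply (meq_on_trans (mmul_meq_on (meq_on_refl _ _ _) (mmul_meq_on V1 (meq_on_refl _ _ _)))).
    apply (meq_on_trans (mmul_meq_on (meq_on_refl _ _ _) (mmul_idm_l _ _ _))). auto.
  - rewrite adj_mmul, mmul_assoc, <- (mmul_assoc n n (adj U)).
    apply (meq_on_trans (mmul_meq_on (meq_on_refl _ _ _) (mmul_meq_on U2 (meq_on_refl _ _ _)))).
    apply (meq_on_trans (mmul_meq_on (meq_on_refl _ _ _) (mmul_idm_l _ _ _))). auto.
Qed.
Lemma unitary_adj n U : unitary n U -> unitary n (adj U).
Proof. intros [U1 U2]. split; rewrite adj_adj; auto. Qed.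

Definition conjM (A : Mat) : Mat := fun i j => Cconj (A i j).
Definition trM (A : Mat) : Mat := fun i j => A j i.

Lemma conjM_mmul p A B : conjM (mmul p A B) = mmul p (conjM A) (conjM B).
Proof.
  do 2 (apply functional_extensionality; intro). unfold conjM, mmul. rewrite csum_conj.
  apply csum_ext; intros. apply Cconj_mul.
Qed.
Lemma conjM_diagm l : conjM (diagm l) = diagm l.
Proof.
  do 2 (apply functional_extensionality; intro). unfold conjM, diagm. destruct (Nat.eqb _ _); cring.
Qed.
Lemma conjM_idm : conjM idm = idm.
Proof.
  do 2 (apply functional_extensionality; intro). unfold conjM, idm. destruct (Nat.eqb _ _); cring.
Qed.
Lemma conjM_meq_on r c A B : meq_on r c A B -> meq_on r c (conjM A) (conjM B).
Proof. intros H i j hi hj. unfold conjM. rewrite H; auto. Qed.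
Lemma unitary_conjM n V : unitary n V -> unitary n (conjM V).
Proof.
  intros [V1 V2]. split; change (adj (conjM V)) with (conjM (adj V));
    rewrite <- conjM_mmul, <- conjM_idm; apply conjM_meq_on; auto.
Qed.

Definition mixM (K : nat) (p : nat -> R) (tau : nat -> Mat) : Mat :=
  fun i j => csum K (fun x => Cmul (RtoC (p x)) (tau x i j)).

Lemma mmul_mixM_l n K p tau V : mmul n (mixM K p tau) V = mixM K p (fun x => mmul n (tau x) V).
Proof.
  do 2 (apply functional_extensionality; intro). unfold mmul, mixM.
  rewrite (csum_ext _ _ (fun k => csum K (fun y => Cmul (RtoC (p y)) (Cmul (tau y x k) (V k x0))))).
  - rewrite csum_swap. apply csum_ext; intros. apply csum_mul_l.
  - intros. rewrite <- csum_mul_r. apply csum_ext; intros; cring.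
Qed.
Lemma mmul_mixM_r n K p tau A : mmul n A (mixM K p tau) = mixM K p (fun x => mmul n A (tau x)).
Proof.
  do 2 (apply functional_extensionality; intro). unfold mmul, mixM.
  rewrite (csum_ext _ _ (fun k => csum K (fun y => Cmul (RtoC (p y)) (Cmul (A x k) (tau y k x0))))).
  - rewrite csum_swap. apply csum_ext; intros. apply csum_mul_l.
  - intros. rewrite <- csum_mul_l. apply csum_ext; intros; cring.
Qed.

Definition blockdiag (n : nat) (M : nat -> Mat) : Mat :=
  fun i j => if Nat.eqb (i / n) (j / n) then M (i / n)%nat (i mod n)%nat (j mod n)%nat else C0.

Lemma blockdiag_mmul d n M N : (0 < n)%nat ->
  meq (d * n) (mmul (d * n) (blockdiag n M) (blockdiag n N))
    (blockdiag n (fun z => mmul n (M z) (N z))).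
Proof.
  intros hn i j hi hj. unfold mmul at 1. rewrite csum_pair.
  rewrite <- (csum_delta d (i / n) (fun z => blockdiag n (fun z => mmul n (M z) (N z)) i j))
    by (apply div_lt_pair; auto).
  apply csum_ext; intros z hz.
  transitivity (csum n (fun k => if Nat.eqb (i / n) z then (if Nat.eqb z (j / n) then
      Cmul (M z (i mod n)%nat k) (N z k (j mod n)%nat) else C0) else C0)).
  { apply csum_ext; intros k hk. unfold blockdiag. rewrite !pair_div, !pair_mod by auto.
    destruct (Nat.eqb_spec (i / n) z), (Nat.eqb_spec z (j / n)); try cring.
    rewrite e. reflexivity. }
  unfold blockdiag. destruct (Nat.eqb_spec z (i / n)) as [->|ne].
  - rewrite Nat.eqb_refl. destruct (Nat.eqb_spec (i / n) (j / n)); [reflexivity|].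
    apply csum_eq0; reflexivity.
  - apply csum_eq0; intros k hk. destruct (Nat.eqb_spec (i / n) z); [lia | reflexivity].
Qed.

Lemma adj_blockdiag n M : adj (blockdiag n M) = blockdiag n (fun z => adj (M z)).
Proof.
  do 2 (apply functional_extensionality; intro). unfold adj, blockdiag.
  destruct (Nat.eqb_spec (x0 / n) (x / n)), (Nat.eqb_spec (x / n) (x0 / n)); try lia.
  - rewrite e. reflexivity.
  - cring.
Qed.

Lemma blockdiag_diagm n (lam : nat -> nat -> R) :
  blockdiag n (fun z => diagm (lam z)) = diagm (fun i => lam (i / n)%nat (i mod n)%nat).
Proof.
  do 2 (apply functional_extensionality; intro). unfold blockdiag, diagm.
  destruct (Nat.eqb_spec (x / n) (x0 / n)) as [e1|e1],
    (Nat.eqb_spec (x mod n) (x0 mod n)) as [e2|e2], (Nat.eqb_spec x x0) as [e3|e3];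
    try reflexivity; exfalso; first [ apply e3; eapply div_mod_inj; eauto | subst; tauto ].
Qed.

Lemma blockdiag_idm n : blockdiag n (fun _ => idm) = idm.
Proof.
  change idm with (diagm (fun _ => 1)). apply (blockdiag_diagm n (fun _ _ => 1)).
Qed.

Lemma blockdiag_meq d n M N : (0 < n)%nat -> (forall z, (z < d)%nat -> meq n (M z) (N z)) ->
  meq (d * n) (blockdiag n M) (blockdiag n N).
Proof.
  intros hn H i j hi hj. unfold blockdiag. destruct (Nat.eqb_spec (i / n) (j / n)); auto.
  apply H; try apply mod_lt_pair; auto. apply div_lt_pair; auto.
Qed.

Lemma unitary_blockdiag d n U : (0 < n)%nat -> (forall z, (z < d)%nat -> unitary n (U z)) ->
  unitary (d * n) (blockdiag n U).
Proof.
  intros hn HU. split; rewrite adj_blockdiag;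
    apply (meq_on_trans (blockdiag_mmul d n _ _ hn)); rewrite <- (blockdiag_idm n);
    apply blockdiag_meq; auto; intros z hz; apply HU; auto.
Qed.

Definition herm (n : nat) (A : Mat) : Prop :=
  forall i j, (i < n)%nat -> (j < n)%nat -> A i j = Cconj (A j i).

(** * The spectral theorem, transferred from MathComp's complex matrices *)

Module Spectral.
Import all_boot all_order all_algebra complex Rstruct.
Import GRing.Theory Num.Theory.
Local Open Scope ring_scope.
Local Open Scope sesquilinear_scope.

Notation RC := (Rdefinitions.R[i]).
Definition to_complex (z : Defs.C) : RC := Complex z.1 z.2.
Definition of_complex (w : RC) : Defs.C := (complex.Re w, complex.Im w).

Lemma of_complexK z : of_complex (to_complex z) = z. Proof. by case: z. Qed.
Lemma to_complexK w : to_complex (of_complex w) = w. Proof. by case: w. Qed.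
Lemma to_complex_mul a b : to_complex (Cmul a b) = to_complex a * to_complex b.
Proof. by case: a; case: b. Qed.
Lemma to_complex_conj a : to_complex (Cconj a) = (to_complex a)^*. Proof. by case: a. Qed.
Lemma to_complex_csum n f : to_complex (csum n f) = \sum_(k < n) to_complex (f k).
Proof.
elim: n => [|n IH]; first by rewrite big_ord0.
by rewrite big_ord_recr /= -IH; case: (csum n f); case: (f n).
Qed.

Section Embedding.
Variable n' : nat.
Local Notation n := n'.+1.

Definition embed_mx (M : 'M[RC]_n) : Mat := fun i j =>
  if (i < n)%N && (j < n)%N then of_complex (M (inord i) (inord j)) else Defs.C0.

Lemma embed_mxE M i j : (i < n)%N -> (j < n)%N ->
  embed_mx M i j = of_complex (M (inord i) (inord j)).
Proof. by rewrite /embed_mx => -> ->. Qed.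

Lemma embed_mx_mul A B : meq n (mmul n (embed_mx A) (embed_mx B)) (embed_mx (A *m B)).
Proof.
move=> i j /ltP hi /ltP hj; rewrite embed_mxE // /mmul.
rewrite -[csum _ _]of_complexK to_complex_csum mxE; congr of_complex.
by apply: eq_bigr => k _; rewrite to_complex_mul !embed_mxE // !to_complexK inord_val.
Qed.

Lemma embed_mx_adj A : meq n (adj (embed_mx A)) (embed_mx (A^t*)).
Proof.
move=> i j /ltP hi /ltP hj; rewrite /adj !embed_mxE // !mxE.
by apply: (can_inj of_complexK); rewrite to_complex_conj !to_complexK.
Qed.

Lemma embed_mx_scalar (M : 'M[RC]_n) (lam : 'I_n -> R) :
  (forall i j, M i j = if i == j then Complex (lam i) 0 else 0) ->
  meq n (embed_mx M) (diagm (fun i => lam (inord i))).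
Proof.
move=> HM i j /ltP hi /ltP hj; rewrite embed_mxE // HM /diagm.
case: (PeanoNat.Nat.eqb_spec i j) => [->|hij]; first by rewrite eqxx.
suff -> : (inord i == inord j :> 'I_n) = false by [].
by apply/eqP => /(congr1 val); rewrite /= !inordK.
Qed.
End Embedding.
Arguments embed_mx {n'}.

Lemma spectral_theorem n (A : Mat) : herm n A ->
  exists U lam, unitary n U /\ meq n A (mmul n (mmul n U (diagm lam)) (adj U)).
Proof.
case: n => [|n'] hA.
  by exists (fun _ _ => Defs.C0), (fun _ => 0%R); split; first split; move=> i j hi; lia.
pose B : 'M[RC]_n'.+1 := \matrix_(i, j) to_complex (A i j).
have Bh : B \is hermsymmx.
  apply/is_hermitianmxP; rewrite expr0 scale1r; apply/matrixP=> i j; rewrite !mxE.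
  by rewrite (hA i j (ltP (ltn_ord i)) (ltP (ltn_ord j))) to_complex_conj.
have /orthomx_spectralP BE := hermitian_normalmx Bh.
have Dr := hermitian_spectral_diag_real Bh.
set P := spectralmx B in BE; set D := spectral_diag B in BE Dr.
have Pu : P \is unitarymx by apply: spectral_unitarymx.
rewrite invmx_unitary // in BE.
have hid (M : 'M[RC]_n'.+1) : M = 1%:M -> meq n'.+1 (embed_mx M) idm.
  move=> ->; apply: (embed_mx_scalar _ _ (fun _ => 1%R)) => i j; rewrite !mxE.
  by case: (i == j).
exists (embed_mx (P^t* )), (fun i => complex.Re (D 0 (inord i))).
split; first split.
- apply: meq_on_trans (hid (P^t* *m P) _);
    last by rewrite -invmx_unitary // mulVmx // unitarymx_unit.
  apply: meq_on_trans (mmul_meq_on (meq_on_refl _ _ _) (embed_mx_adj _ _)) _.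
  by rewrite trmxCK; apply: embed_mx_mul.
- apply: meq_on_trans (hid (P *m P^t* ) _); last by apply/unitarymxP.
  apply: meq_on_trans (mmul_meq_on (embed_mx_adj _ _) (meq_on_refl _ _ _)) _.
  by rewrite trmxCK; apply: embed_mx_mul.
- have AB : meq n'.+1 A (embed_mx B).
    by move=> i j /ltP hi /ltP hj; rewrite embed_mxE // mxE !inordK // of_complexK.
  apply: meq_on_trans AB _; rewrite BE.
  apply: meq_on_sym; apply: meq_on_trans _ (embed_mx_mul _ _ _).
  apply: mmul_meq_on; last by rewrite -{2}[P]trmxCK; apply: embed_mx_adj.
  apply: meq_on_trans _ (embed_mx_mul _ _ _).
  apply: mmul_meq_on => //.
  apply: meq_on_sym; apply: (embed_mx_scalar _ _ (fun i => complex.Re (D 0 i))) => i j.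
  rewrite !mxE; case: (i =P j) => [->|]; last by rewrite mulr0n.
  rewrite mulr1n; have := mxOverP Dr 0 j.
  by case: (D 0 j) => a b /=; rewrite complex_real => /eqP ->.
Qed.
End Spectral.

(** * Convexity of [x ln x] *)

Definition xlnx (x : R) : R := x * ln x.

Lemma xlnx_0 : xlnx 0 = 0. Proof. unfold xlnx; ring. Qed.

Lemma xlnx_mul a b : 0 <= a -> 0 <= b -> xlnx (a * b) = b * xlnx a + a * xlnx b.
Proof.
  intros ha hb. unfold xlnx.
  destruct (Req_dec a 0) as [->|na]; [ring|].
  destruct (Req_dec b 0) as [->|nb]; [ring|].
  rewrite ln_mult by lra. ring.
Qed.

Lemma xlnx_tangent t y : 0 < t -> 0 <= y -> y * ln t + y - t <= xlnx y.
Proof.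
  intros ht hy. unfold xlnx. destruct (Req_dec y 0) as [->|ny]; [lra|].
  assert (hy' : 0 < y) by lra.
  assert (hq : 0 < t / y) by (apply Rdiv_lt_0_compat; lra).
  pose proof (exp_ineq1_le (ln (t / y))) as E. rewrite exp_ln in E by exact hq.
  unfold Rdiv in E. rewrite ln_mult, ln_Rinv in E by (try apply Rinv_0_lt_compat; lra).
  assert (Ey : y * (ln t + - ln y) <= y * (t * / y - 1)) by (apply Rmult_le_compat_l; lra).
  replace (y * (t * / y - 1)) with (t - y) in Ey by (field; lra). lra.
Qed.

(* Jensen's inequality for [xlnx] with substochastic weights: the missing mass
   sits at [0], where [xlnx] vanishes. *)
Lemma jensen_xlnx K (w a : nat -> R) :
  (forall k, (k < K)%nat -> 0 <= w k) -> (forall k, (k < K)%nat -> 0 <= a k) ->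
  rsum K w <= 1 ->
  xlnx (rsum K (fun k => w k * a k)) <= rsum K (fun k => w k * xlnx (a k)).
Proof.
  intros hw ha hs. set (m := rsum K (fun k => w k * a k)).
  set (X := rsum K (fun k => w k * xlnx (a k))).
  assert (hm : 0 <= m) by (apply rsum_ge0; intros; apply Rmult_le_pos; auto).
  assert (hW : 0 <= rsum K w) by (apply rsum_ge0; auto).
  assert (tangent : forall t, 0 < t -> m * ln t + m - t * rsum K w <= X).
  { intros t ht.
    replace (m * ln t + m - t * rsum K w)
      with (rsum K (fun k => w k * (a k * ln t + a k - t))).
    - apply rsum_le; intros k hk. apply Rmult_le_compat_l; auto. apply xlnx_tangent; auto.
    - unfold m. rewrite <- rsum_mul_r, <- rsum_mul_l.
      unfold Rminus. rewrite <- rsum_opp, <- !rsum_add. apply rsum_ext; intros; ring. }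
  destruct (Req_dec m 0) as [E|E].
  - rewrite E, xlnx_0. destruct (Rle_lt_dec 0 X) as [|hX]; auto.
    specialize (tangent (- X / 2) ltac:(lra)). rewrite E in tangent. nra.
  - specialize (tangent m ltac:(lra)). unfold xlnx. nra.
Qed.

(** * Schur concavity of [- sum xlnx]

   If [T T^* = diag alpha], the weights [|T_ij|^2 / alpha_i] are doubly
   substochastic, so the column norms of [T] are majorised by [alpha]. *)

Section Schur.
Variables (a b : nat) (T : Mat) (alpha : nat -> R).
Hypothesis HT : meq a (mmul b T (adj T)) (diagm alpha).

Let alpha_row_norm i : (i < a)%nat -> alpha i = rsum b (fun j => Cnorm2 (T i j)).
Proof.
  intros hi. specialize (HT i i hi hi). unfold diagm in HT. rewrite Nat.eqb_refl in HT.
  rewrite mmul_adj_diag in HT. injection HT; auto.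
Qed.

Let alpha_ge0 i : (i < a)%nat -> 0 <= alpha i.
Proof. intros hi. rewrite alpha_row_norm by auto. apply rsum_ge0; intros; apply Cnorm2_ge0. Qed.

Let c (i : nat) : R := if Rlt_dec 0 (alpha i) then / sqrt (alpha i) else 0.

Let c_sq_alpha i : c i * c i * alpha i = if Rlt_dec 0 (alpha i) then 1 else 0.
Proof.
  unfold c. destruct (Rlt_dec 0 (alpha i)) as [h|]; [|ring].
  pose proof (sqrt_lt_R0 _ h). rewrite <- (sqrt_sqrt (alpha i)) at 3 by lra. field. lra.
Qed.

Let c_sq_entry i j : (i < a)%nat -> (j < b)%nat ->
  c i * c i * alpha i * Cnorm2 (T i j) = Cnorm2 (T i j).
Proof.
  intros hi hj. rewrite c_sq_alpha. destruct (Rlt_dec 0 (alpha i)); [ring|].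
  assert (alpha i = 0) by (pose proof (alpha_ge0 i hi); lra).
  rewrite (rsum_eq0_inv b (fun j => Cnorm2 (T i j))); auto.
  - ring.
  - intros; apply Cnorm2_ge0.
  - rewrite <- alpha_row_norm; auto.
Qed.

Let S i j := Cmul (RtoC (c i)) (T i j).

(* Bessel's inequality for the orthonormal rows of [S], tested on the basis
   vector [e_j]: with [Q = S^* S e_j] one has [|Q|^2 = p = Q_j], whence [p <= 1]. *)
Let column_weight_le1 j : (j < b)%nat -> rsum a (fun i => c i * c i * Cnorm2 (T i j)) <= 1.
Proof.
  intros hj. set (p := rsum a (fun i => c i * c i * Cnorm2 (T i j))).
  set (Q := fun l => csum a (fun i => Cmul (Cconj (S i j)) (S i l))).
  assert (normQ : csum b (fun l => Cmul (Q l) (Cconj (Q l))) = RtoC p).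
  { transitivity (csum b (fun l => csum a (fun i => csum a (fun k =>
        Cmul (Cmul (Cconj (S i j)) (S k j)) (Cmul (S i l) (Cconj (S k l))))))).
    { apply csum_ext; intros l hl. unfold Q. rewrite csum_conj, <- csum_mul_r.
      apply csum_ext; intros i hi. rewrite <- csum_mul_l. apply csum_ext; intros k hk. cring. }
    rewrite csum_swap. unfold p. rewrite <- csum_RtoC. apply csum_ext; intros i hi.
    rewrite csum_swap.
    transitivity (csum a (fun k => if Nat.eqb i k then
        Cmul (Cmul (Cconj (S i j)) (S k j)) (RtoC (c i * c k * alpha i)) else C0)).
    { apply csum_ext; intros k hk. rewrite csum_mul_l.
      assert (E : csum b (fun l => Cmul (S i l) (Cconj (S k l))) =
                  Cmul (RtoC (c i * c k)) (mmul b T (adj T) i k)).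
      { unfold mmul, adj. rewrite <- csum_mul_l. apply csum_ext; intros. unfold S. cring. }
      rewrite E, HT by auto. unfold diagm.
      destruct (Nat.eqb_spec i k); [subst|]; cring. }
    rewrite csum_delta' by auto. unfold S.
    rewrite <- (c_sq_entry i j) by auto. unfold Cnorm2; cring. }
  assert (hp : 0 <= p).
  { apply rsum_ge0; intros. apply Rmult_le_pos; [apply Rle_0_sqr | apply Cnorm2_ge0]. }
  rewrite (csum_ext _ _ (fun l => RtoC (Cnorm2 (Q l)))) in normQ by (intros; apply Cmul_conj_r).
  rewrite csum_RtoC in normQ. injection normQ; intros normQ'.
  assert (Qj_le : Cnorm2 (Q j) <= rsum b (fun l => Cnorm2 (Q l)))
    by (apply (rsum_ge_term b (fun l => Cnorm2 (Q l)) j); auto; intros; apply Cnorm2_ge0).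
  assert (Qj : Q j = RtoC p).
  { unfold Q, p. rewrite <- csum_RtoC. apply csum_ext; intros i hi. unfold S, Cnorm2. cring. }
  rewrite Qj, Cnorm2_RtoC in Qj_le. nra.
Qed.

Lemma xlnx_schur :
  rsum b (fun j => xlnx (rsum a (fun i => Cnorm2 (T i j)))) <= rsum a (fun i => xlnx (alpha i)).
Proof.
  set (w := fun i j => c i * c i * Cnorm2 (T i j)).
  assert (hw : forall i j, 0 <= w i j).
  { intros. apply Rmult_le_pos; [apply Rle_0_sqr | apply Cnorm2_ge0]. }
  apply Rle_trans with (rsum b (fun j => rsum a (fun i => w i j * xlnx (alpha i)))).
  - apply rsum_le; intros j hj.
    replace (rsum a (fun i => Cnorm2 (T i j))) with (rsum a (fun i => w i j * alpha i)).
    + apply jensen_xlnx; auto. apply column_weight_le1; auto.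
    + apply rsum_ext; intros i hi. unfold w.
      transitivity (c i * c i * alpha i * Cnorm2 (T i j)); [ring | apply c_sq_entry; auto].
  - rewrite rsum_swap. apply Req_le. apply rsum_ext; intros i hi.
    unfold w. rewrite rsum_mul_r, rsum_mul_l, <- alpha_row_norm by auto.
    rewrite c_sq_alpha. destruct (Rlt_dec 0 (alpha i)); [ring|].
    assert (E : alpha i = 0) by (pose proof (alpha_ge0 i hi); lra). rewrite E, xlnx_0. ring.
Qed.
End Schur.

(** * Spectral decompositions and von Neumann entropy *)

Definition spectral_decomp (n : nat) (rho U : Mat) (lam : nat -> R) : Prop :=
  unitary n U /\ meq n rho (mmul n (mmul n U (diagm lam)) (adj U)).

Definition psd (n : nat) (rho : Mat) : Prop :=
  exists U lam, spectral_decomp n rho U lam /\ forall i, (i < n)%nat -> 0 <= lam i.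

Lemma spectral_decomp_diag_conj n rho U lam V j :
  meq n rho (mmul n (mmul n U (diagm lam)) (adj U)) -> (j < n)%nat ->
  mmul n (adj V) (mmul n rho V) j j =
  RtoC (rsum n (fun l => lam l * Cnorm2 (mmul n (adj U) V l j))).
Proof.
  intros H hj.
  rewrite (mmul_meq_on (meq_on_refl n n _) (mmul_meq_on H (meq_on_refl n n V))) by auto.
  rewrite !mmul_assoc, <- (mmul_assoc n n (adj V) U), <- (mmul_assoc n n (mmul n (adj V) U)).
  unfold mmul at 1. rewrite <- csum_RtoC. apply csum_ext; intros l hl.
  rewrite mmul_diagm_r by auto.
  replace (mmul n (adj V) U j l) with (Cconj (mmul n (adj U) V l j)).
  - rewrite RtoC_mul, <- Cmul_conj_l. cring.
  - change (Cconj (mmul n (adj U) V l j)) with (adj (mmul n (adj U) V) j l).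
    rewrite adj_mmul, adj_adj. reflexivity.
Qed.

Lemma spectral_decomp_eigenvalue n rho U lam j : spectral_decomp n rho U lam -> (j < n)%nat ->
  mmul n (adj U) (mmul n rho U) j j = RtoC (lam j).
Proof.
  intros [[U1 U2] HD] hj. rewrite (spectral_decomp_diag_conj n rho U lam U j HD hj). f_equal.
  rewrite <- (rsum_delta n j lam hj). apply rsum_ext; intros l hl.
  rewrite U2 by auto. unfold idm. destruct (Nat.eqb l j); unfold Cnorm2; cunfold; ring.
Qed.

Lemma spectral_decomp_meq n rho rho' U lam :
  spectral_decomp n rho U lam -> meq n rho rho' -> spectral_decomp n rho' U lam.
Proof. intros [HU HD] E. split; auto. exact (meq_on_trans (meq_on_sym E) HD). Qed.

Lemma psd_meq n rho rho' : psd n rho -> meq n rho rho' -> psd n rho'.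
Proof. intros [U [l [H hl]]] E. exists U, l. split; auto. eapply spectral_decomp_meq; eauto. Qed.

Lemma spectral_decomp_herm n rho U lam : spectral_decomp n rho U lam -> herm n rho.
Proof.
  intros [_ HD] i j hi hj. rewrite HD, HD by auto.
  change (Cconj (mmul n (mmul n U (diagm lam)) (adj U) j i))
    with (adj (mmul n (mmul n U (diagm lam)) (adj U)) i j).
  rewrite !adj_mmul, adj_adj, adj_diagm, !mmul_assoc. reflexivity.
Qed.

Lemma spectral_decomp_unitary_conj n rho U lam V :
  spectral_decomp n rho U lam -> unitary n V ->
  spectral_decomp n (mmul n (mmul n V rho) (adj V)) (mmul n V U) lam.
Proof.
  intros [HU HD] HV. split; [apply unitary_mmul; auto|].
  apply (meq_on_trans (mmul_meq_on (mmul_meq_on (meq_on_refl _ _ _) HD) (meq_on_refl _ _ _))).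
  rewrite adj_mmul, !mmul_assoc. apply meq_on_refl.
Qed.

Lemma mtrace_spectral_decomp n rho U lam :
  spectral_decomp n rho U lam -> mtrace n rho = RtoC (rsum n lam).
Proof.
  intros [[U1 U2] HD]. rewrite (mtrace_meq n _ _ HD). unfold mtrace, mmul at 1.
  rewrite (csum_ext _ _ (fun i => csum n (fun l => Cmul (RtoC (lam l)) (Cmul (Cconj (U i l)) (U i l))))).
  2:{ intros i hi. apply csum_ext; intros l hl. rewrite mmul_diagm_r by auto. unfold adj; cring. }
  rewrite csum_swap, <- csum_RtoC. apply csum_ext; intros l hl. rewrite csum_mul_l.
  change (csum n (fun i => Cmul (Cconj (U i l)) (U i l))) with (mmul n (adj U) U l l).
  rewrite U2 by auto. unfold idm. rewrite Nat.eqb_refl. cring.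
Qed.

Lemma xlnx_unitary_mix n U V lam : unitary n U -> unitary n V ->
  (forall i, (i < n)%nat -> 0 <= lam i) ->
  rsum n (fun j => xlnx (rsum n (fun l => lam l * Cnorm2 (mmul n (adj U) V l j))))
  <= rsum n (fun i => xlnx (lam i)).
Proof.
  intros HU HV hl.
  set (A := mmul n (adj U) V).
  set (T := fun i j => Cmul (RtoC (sqrt (lam i))) (A i j)).
  assert (HT : meq n (mmul n T (adj T)) (diagm lam)).
  { intros i k hi hk.
    transitivity (Cmul (RtoC (sqrt (lam i) * sqrt (lam k))) (mmul n A (adj A) i k)).
    { unfold mmul, adj, T. rewrite <- csum_mul_l. apply csum_ext; intros; cring. }
    destruct (unitary_mmul n (adj U) V (unitary_adj n U HU) HV) as [HA _].
    rewrite HA by auto. unfold idm, diagm.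
    destruct (Nat.eqb_spec i k); [subst; rewrite sqrt_sqrt by auto|]; cring. }
  eapply Rle_trans; [|apply (xlnx_schur n n T lam HT)].
  apply Req_le, rsum_ext; intros j hj. f_equal. apply rsum_ext; intros i hi.
  unfold T. rewrite Cnorm2_mul, Cnorm2_RtoC, sqrt_sqrt by auto. reflexivity.
Qed.

Section Uniqueness.
Variables (n : nat) (rho U V : Mat) (lam mu : nat -> R).
Hypotheses (HU : spectral_decomp n rho U lam) (HV : spectral_decomp n rho V mu).

Lemma spectral_decomp_eigenvalue_mix j : (j < n)%nat ->
  mu j = rsum n (fun l => lam l * Cnorm2 (mmul n (adj U) V l j)).
Proof.
  intros hj. pose proof (spectral_decomp_eigenvalue n rho V mu j HV hj) as E.
  rewrite (spectral_decomp_diag_conj n rho U lam V j (proj2 HU) hj) in E.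
  injection E; auto.
Qed.

Hypothesis lam_ge0 : forall i, (i < n)%nat -> 0 <= lam i.

Lemma spectral_decomp_nonneg j : (j < n)%nat -> 0 <= mu j.
Proof.
  intros hj. rewrite spectral_decomp_eigenvalue_mix by auto.
  apply rsum_ge0; intros. apply Rmult_le_pos; auto. apply Cnorm2_ge0.
Qed.

Lemma xlnx_spectrum_le : rsum n (fun j => xlnx (mu j)) <= rsum n (fun i => xlnx (lam i)).
Proof.
  rewrite (rsum_ext n _ (fun j => xlnx (rsum n (fun l => lam l * Cnorm2 (mmul n (adj U) V l j)))))
    by (intros; rewrite spectral_decomp_eigenvalue_mix; auto).
  apply xlnx_unitary_mix; auto; [apply HU | apply HV].
Qed.
End Uniqueness.

Lemma xlnx_spectrum_unique n rho U lam V mu :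
  spectral_decomp n rho U lam -> (forall i, (i < n)%nat -> 0 <= lam i) ->
  spectral_decomp n rho V mu ->
  rsum n (fun j => xlnx (mu j)) = rsum n (fun i => xlnx (lam i)).
Proof.
  intros HU hl HV. apply Rle_antisym.
  - eapply xlnx_spectrum_le; eauto.
  - apply (xlnx_spectrum_le n rho V U mu lam); auto.
    exact (spectral_decomp_nonneg n rho U V lam mu HU HV hl).
Qed.

(* [vN_entropy] picks an arbitrary decomposition by [epsilon]; any other one
   gives the same value once one of them has a nonnegative spectrum. *)
Lemma vN_entropy_spectral n rho U lam : psd n rho -> spectral_decomp n rho U lam ->
  vN_entropy n rho = - rsum n (fun i => xlnx (lam i)).
Proof.
  intros [U0 [l0 [H0 hl0]]] HD. unfold vN_entropy.
  match goal with |- epsilon ?i ?P = _ => assert (E : exists s, P s) end.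
  { exists (- rsum n (fun i => l0 i * ln (l0 i))). exists U0, l0. destruct H0. auto. }
  pose proof (epsilon_spec _ _ E) as [U1 [l1 [h1 [h2 ->]]]].
  change (- rsum n (fun i => xlnx (l1 i)) = - rsum n (fun i => xlnx (lam i))).
  rewrite (xlnx_spectrum_unique n rho U0 l0 U1 l1), (xlnx_spectrum_unique n rho U0 l0 U lam);
    auto. split; auto.
Qed.

Lemma vN_entropy_meq n rho rho' : psd n rho -> meq n rho rho' ->
  vN_entropy n rho' = vN_entropy n rho.
Proof.
  intros G E. pose proof G as [U [l [D hl]]].
  rewrite (vN_entropy_spectral n rho U l G D),
    (vN_entropy_spectral n rho' U l (psd_meq _ _ _ G E) (spectral_decomp_meq _ _ _ _ _ D E)).
  reflexivity.
Qed.

Lemma psd_unitary_conj n rho V : psd n rho -> unitary n V ->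
  psd n (mmul n (mmul n V rho) (adj V)).
Proof.
  intros [U [l [H hl]]] HV. exists (mmul n V U), l.
  split; auto. apply spectral_decomp_unitary_conj; auto.
Qed.

Lemma vN_entropy_unitary_conj n rho V : psd n rho -> unitary n V ->
  vN_entropy n (mmul n (mmul n V rho) (adj V)) = vN_entropy n rho.
Proof.
  intros G HV. pose proof (psd_unitary_conj n rho V G HV) as G'.
  pose proof G as [U [l [H hl]]].
  rewrite (vN_entropy_spectral n rho U l G H),
    (vN_entropy_spectral _ _ (mmul n V U) l G' (spectral_decomp_unitary_conj _ _ _ _ _ H HV)).
  reflexivity.
Qed.

Lemma psd_of_spectral n rho U lam : spectral_decomp n rho U lam ->
  (forall v : Vec, 0 <= Cre (csum n (fun i => csum n (fun j =>
                   Cmul (Cconj (v i)) (Cmul (rho i j) (v j)))))) ->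
  psd n rho.
Proof.
  intros HD Hp. exists U, lam. split; auto. intros j hj.
  pose proof (spectral_decomp_eigenvalue n rho U lam j HD hj) as E.
  specialize (Hp (fun i => U i j)); cbv beta in Hp.
  replace (csum n (fun i => csum n (fun k => Cmul (Cconj (U i j)) (Cmul (rho i k) (U k j)))))
    with (mmul n (adj U) (mmul n rho U) j j) in Hp.
  - rewrite E in Hp. exact Hp.
  - unfold mmul at 1. apply csum_ext; intros i hi. unfold adj, mmul. rewrite <- csum_mul_l. reflexivity.
Qed.

Lemma density_psd n rho : density n rho -> psd n rho.
Proof.
  intros [Hh [Hp _]]. destruct (Spectral.spectral_theorem n rho Hh) as [U [l HD]].
  exact (psd_of_spectral n rho U l HD Hp).
Qed.

Lemma gram_psd n r rho Y : meq n rho (mmul r Y (adj Y)) -> psd n rho.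
Proof.
  intros E.
  assert (Hh : herm n rho).
  { intros i j hi hj. rewrite E, E by auto. unfold mmul, adj. rewrite csum_conj.
    apply csum_ext; intros; cring. }
  destruct (Spectral.spectral_theorem n rho Hh) as [U [l HD]].
  exists U, l. split; [exact HD|]. intros j hj.
  pose proof (spectral_decomp_eigenvalue n rho U l j HD hj) as Ej.
  rewrite (mmul_meq_on (meq_on_refl _ _ _) (mmul_meq_on E (meq_on_refl _ _ _))) in Ej by auto.
  replace (mmul n (adj U) (mmul n (mmul r Y (adj Y)) U))
    with (mmul r (mmul n (adj U) Y) (adj (mmul n (adj U) Y))) in Ej
    by (rewrite adj_mmul, adj_adj, !mmul_assoc; reflexivity).
  rewrite mmul_adj_diag in Ej. injection Ej; intros <-.
  apply rsum_ge0; intros; apply Cnorm2_ge0.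
Qed.

Lemma psd_family_decomp n K (tau : nat -> Mat) : (forall x, (x < K)%nat -> psd n (tau x)) ->
  exists Us Ls, forall x, (x < K)%nat ->
    spectral_decomp n (tau x) (Us x) (Ls x) /\ forall i, (i < n)%nat -> 0 <= Ls x i.
Proof.
  intros H.
  set (P := fun x (p : Mat * (nat -> R)) => (x < K)%nat ->
      spectral_decomp n (tau x) (fst p) (snd p) /\ forall i, (i < n)%nat -> 0 <= snd p i).
  set (g := fun x => epsilon (inhabits (idm, fun _ => 0)) (P x)).
  exists (fun x => fst (g x)), (fun x => snd (g x)). intros x hx.
  apply (epsilon_spec _ (P x)); auto.
  destruct (H x hx) as [U [l D]]. exists (U, l). intros _. exact D.
Qed.

(** * Concavity of the von Neumann entropy *)

Lemma herm_mixM n K p tau : (forall x, (x < K)%nat -> herm n (tau x)) -> herm n (mixM K p tau).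
Proof.
  intros H i j hi hj. unfold mixM. rewrite csum_conj. apply csum_ext; intros x hx.
  rewrite (H x hx i j hi hj). cring.
Qed.

Section Mixture.
Variables (n K : nat) (p : nat -> R) (tau Us : nat -> Mat) (Ls : nat -> nat -> R).
Hypothesis Htau : forall x, (x < K)%nat ->
  spectral_decomp n (tau x) (Us x) (Ls x) /\ forall i, (i < n)%nat -> 0 <= Ls x i.
Hypothesis p_ge0 : forall x, (x < K)%nat -> 0 <= p x.

(* [mixed_weight x j] is the [j]-th diagonal entry of [tau x] in an eigenbasis [V] of the mixture. *)
Let mixed_weight (V : Mat) x j := rsum n (fun l => Ls x l * Cnorm2 (mmul n (adj (Us x)) V l j)).

Let mixed_weight_ge0 V x j : (x < K)%nat -> 0 <= mixed_weight V x j.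
Proof. intros. apply rsum_ge0; intros. apply Rmult_le_pos; [apply Htau | apply Cnorm2_ge0]; auto. Qed.

Let mixM_eigenvalue V mu j : spectral_decomp n (mixM K p tau) V mu -> (j < n)%nat ->
  mu j = rsum K (fun x => p x * mixed_weight V x j).
Proof.
  intros HD hj. pose proof (spectral_decomp_eigenvalue n _ V mu j HD hj) as E.
  rewrite mmul_mixM_l, mmul_mixM_r in E. unfold mixM in E.
  rewrite (csum_ext _ _ (fun x => RtoC (p x * mixed_weight V x j))), csum_RtoC in E.
  - injection E; auto.
  - intros x hx. rewrite (spectral_decomp_diag_conj n (tau x) (Us x) (Ls x) V j) by (auto; apply Htau; auto).
    rewrite RtoC_mul. reflexivity.
Qed.

Let mixM_decomp : exists V mu, spectral_decomp n (mixM K p tau) V mu.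
Proof.
  apply Spectral.spectral_theorem, herm_mixM. intros x hx.
  eapply spectral_decomp_herm; apply Htau; auto.
Qed.

Lemma psd_mixM_of_decomps : psd n (mixM K p tau).
Proof.
  destruct mixM_decomp as [V [mu HD]]. exists V, mu. split; auto.
  intros j hj. rewrite (mixM_eigenvalue V mu j HD hj).
  apply rsum_ge0; intros. apply Rmult_le_pos; auto.
Qed.

Hypothesis p_sum1 : rsum K p = 1.

Lemma vN_entropy_mixM_ge :
  rsum K (fun x => p x * (- rsum n (fun i => xlnx (Ls x i)))) <= vN_entropy n (mixM K p tau).
Proof.
  destruct mixM_decomp as [V [mu HD]].
  rewrite (vN_entropy_spectral n _ V mu psd_mixM_of_decomps HD).
  assert (Jensen : rsum n (fun j => xlnx (mu j)) <=
                   rsum n (fun j => rsum K (fun x => p x * xlnx (mixed_weight V x j)))).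
  { apply rsum_le; intros j hj. rewrite (mixM_eigenvalue V mu j HD hj).
    apply jensen_xlnx; [exact p_ge0 | intros; apply mixed_weight_ge0; auto | lra]. }
  assert (Schur : rsum K (fun x => rsum n (fun j => p x * xlnx (mixed_weight V x j))) <=
                  rsum K (fun x => p x * rsum n (fun i => xlnx (Ls x i)))).
  { apply rsum_le; intros x hx. rewrite rsum_mul_l. apply Rmult_le_compat_l; auto.
    apply xlnx_unitary_mix; [apply Htau | apply HD | apply Htau]; auto. }
  rewrite rsum_swap in Jensen.
  rewrite (rsum_ext K _ (fun x => - (p x * rsum n (fun i => xlnx (Ls x i))))) by (intros; ring).
  rewrite rsum_opp. lra.
Qed.
End Mixture.

Lemma psd_mixM n K p tau : (forall x, (x < K)%nat -> 0 <= p x) ->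
  (forall x, (x < K)%nat -> psd n (tau x)) -> psd n (mixM K p tau).
Proof.
  intros hp H. destruct (psd_family_decomp n K tau H) as [Us [Ls HD]].
  exact (psd_mixM_of_decomps n K p tau Us Ls HD hp).
Qed.

Lemma vN_entropy_concave n K p tau : prob K p -> (forall x, (x < K)%nat -> psd n (tau x)) ->
  rsum K (fun x => p x * vN_entropy n (tau x)) <= vN_entropy n (mixM K p tau).
Proof.
  intros [hp hp1] H. destruct (psd_family_decomp n K tau H) as [Us [Ls HD]].
  rewrite (rsum_ext K _ (fun x => p x * (- rsum n (fun i => xlnx (Ls x i))))).
  - apply (vN_entropy_mixM_ge n K p tau Us Ls); auto.
  - intros x hx. f_equal. apply (vN_entropy_spectral n _ (Us x)); [apply H | apply HD]; auto.
Qed.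

(** * [X X^*] and [X^T conj X] have the same entropy *)

Lemma spectral_decomp_diagonalizes n rho U lam : spectral_decomp n rho U lam ->
  meq n (mmul n (adj U) (mmul n rho U)) (diagm lam).
Proof.
  intros [[U1 U2] HD].
  apply (meq_on_trans (mmul_meq_on (meq_on_refl _ _ _) (mmul_meq_on HD (meq_on_refl _ _ _)))).
  rewrite !mmul_assoc, <- (mmul_assoc n n (adj U) U).
  apply (meq_on_trans (mmul_meq_on U2 (mmul_meq_on (meq_on_refl _ _ _) U2))).
  apply (meq_on_trans (mmul_idm_l _ _ _)). apply mmul_idm_r.
Qed.

Lemma mtrace_gram_transpose a b X :
  mtrace a (mmul b X (adj X)) = mtrace b (mmul a (trM X) (adj (trM X))).
Proof. unfold mtrace, mmul, adj, trM. rewrite csum_swap. reflexivity. Qed.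

(* Schur concavity applied to [T] and to [T^*] gives the two inequalities. *)
Lemma xlnx_spectrum_gram_swap a b T al be :
  meq a (mmul b T (adj T)) (diagm al) -> meq b (mmul a (adj T) T) (diagm be) ->
  rsum b (fun j => xlnx (be j)) = rsum a (fun i => xlnx (al i)).
Proof.
  intros HT HTadj.
  assert (HTadj' : meq b (mmul a (adj T) (adj (adj T))) (diagm be)) by (rewrite adj_adj; exact HTadj).
  assert (col_T : forall j, (j < b)%nat -> rsum a (fun i => Cnorm2 (T i j)) = be j).
  { intros j hj. pose proof (HTadj' j j hj hj) as E. unfold diagm in E.
    rewrite Nat.eqb_refl, mmul_adj_diag in E.
    injection E; intros <-. apply rsum_ext; intros. unfold adj. symmetry; apply Cnorm2_conj. }
  assert (col_Tadj : forall i, (i < a)%nat -> rsum b (fun j => Cnorm2 (adj T j i)) = al i).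
  { intros i hi. pose proof (HT i i hi hi) as E. unfold diagm in E.
    rewrite Nat.eqb_refl, mmul_adj_diag in E.
    injection E; intros <-. apply rsum_ext; intros. unfold adj. apply Cnorm2_conj. }
  apply Rle_antisym.
  - pose proof (xlnx_schur a b T al HT) as S.
    rewrite (rsum_ext b _ (fun j => xlnx (be j))) in S by (intros; rewrite col_T; auto). exact S.
  - pose proof (xlnx_schur b a (adj T) be HTadj') as S.
    rewrite (rsum_ext a _ (fun i => xlnx (al i))) in S by (intros; rewrite col_Tadj; auto). exact S.
Qed.

(* With [X X^* = U diag(al) U^*] and [X^T conj X = V diag(be) V^*], the matrix
   [T = U^* X conj V] satisfies [T T^* = diag al] and [T^* T = diag be]. *)
Lemma vN_entropy_gram_transpose a b X :
  vN_entropy a (mmul b X (adj X)) = vN_entropy b (mmul a (trM X) (adj (trM X))).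
Proof.
  pose proof (gram_psd a b _ X (meq_on_refl _ _ _)) as GA.
  pose proof (gram_psd b a _ (trM X) (meq_on_refl _ _ _)) as GB.
  pose proof GA as [U [al [DA hal]]]. pose proof GB as [V [be [DB hbe]]].
  rewrite (vN_entropy_spectral _ _ _ _ GA DA), (vN_entropy_spectral _ _ _ _ GB DB). f_equal.
  set (Vc := conjM V).
  assert (HVc : unitary b Vc) by (apply unitary_conjM, DB).
  set (T := mmul b (mmul a (adj U) X) Vc).
  symmetry. apply (xlnx_spectrum_gram_swap a b T).
  - unfold T. rewrite !adj_mmul, adj_adj, !mmul_assoc, <- (mmul_assoc b b Vc).
    apply (meq_on_trans (mmul_meq_on (meq_on_refl _ _ _)
      (mmul_meq_on (meq_on_refl _ _ _) (mmul_meq_on (proj1 HVc) (meq_on_refl _ _ _))))).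
    apply (meq_on_trans (mmul_meq_on (meq_on_refl _ _ _) (mmul_meq_on (meq_on_refl _ _ _) (mmul_idm_l _ _ _)))).
    rewrite <- (mmul_assoc b a X). apply spectral_decomp_diagonalizes; auto.
  - unfold T. rewrite !adj_mmul, adj_adj, !mmul_assoc, <- (mmul_assoc a a U).
    apply (meq_on_trans (mmul_meq_on (meq_on_refl _ _ _)
      (mmul_meq_on (meq_on_refl _ _ _) (mmul_meq_on (proj1 (proj1 DA)) (meq_on_refl _ _ _))))).
    apply (meq_on_trans (mmul_meq_on (meq_on_refl _ _ _) (mmul_meq_on (meq_on_refl _ _ _) (mmul_idm_l _ _ _)))).
    rewrite <- (mmul_assoc a b (adj X) X Vc).
    replace (mmul a (adj X) X) with (conjM (mmul a (trM X) (adj (trM X)))).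
    + pose proof (conjM_meq_on _ _ _ _ (spectral_decomp_diagonalizes b _ _ _ DB)) as F.
      rewrite conjM_mmul, conjM_mmul, conjM_diagm in F. exact F.
    + do 2 (apply functional_extensionality; intro). unfold conjM, mmul, adj, trM.
      rewrite csum_conj. apply csum_ext; intros; cring.
Qed.

(** * Entropy of classical-quantum states *)

Definition state (n : nat) (rho : Mat) : Prop := psd n rho /\ mtrace n rho = C1.

Lemma density_state n rho : density n rho -> state n rho.
Proof. intros H. split; [apply density_psd; auto | apply H]. Qed.

Lemma state_dim_pos n rho : state n rho -> (0 < n)%nat.
Proof. intros [_ T]. destruct n; [|lia]. injection T; lra. Qed.

Definition unif (d : nat) : nat -> R := fun _ => / INR d.

Lemma prob_unif d : (0 < d)%nat -> prob d (unif d).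
Proof.
  intros hd. assert (0 < INR d) by (apply lt_0_INR; auto). split.
  - intros; unfold unif; left; apply Rinv_0_lt_compat; auto.
  - unfold unif. rewrite rsum_const. field. lra.
Qed.

Lemma shannon_unif d : (0 < d)%nat -> shannon d (unif d) = ln (INR d).
Proof.
  intros hd. assert (0 < INR d) by (apply lt_0_INR; auto).
  unfold shannon, unif. rewrite rsum_const, ln_Rinv by auto. field. lra.
Qed.

Lemma rsum_unif_const d c : (0 < d)%nat -> rsum d (fun z => unif d z * c) = c.
Proof. intros hd. rewrite rsum_mul_r, (proj2 (prob_unif d hd)). ring. Qed.

Lemma spectral_decomp_cq_state d n P W Us Ls : (0 < n)%nat ->
  (forall z, (z < d)%nat -> spectral_decomp n (W z) (Us z) (Ls z)) ->
  spectral_decomp (d * n) (cq_state n P W) (blockdiag n Us)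
    (fun i => P (i / n)%nat * Ls (i / n)%nat (i mod n)%nat).
Proof.
  intros hn HD. split.
  - apply unitary_blockdiag; auto. intros z hz; apply HD; auto.
  - change (cq_state n P W) with (blockdiag n (fun z a b => Cmul (RtoC (P z)) (W z a b))).
    rewrite <- (blockdiag_diagm n (fun z k => P z * Ls z k)), adj_blockdiag.
    eapply meq_on_trans; [|apply meq_on_sym;
      apply (meq_on_trans (mmul_meq_on (blockdiag_mmul d n _ _ hn) (meq_on_refl _ _ _)));
      apply blockdiag_mmul; auto].
    apply blockdiag_meq; auto. intros z hz a b ha hb.
    rewrite (proj2 (HD z hz)) by auto.
    unfold mmul at 1 3. rewrite <- csum_mul_l. apply csum_ext; intros k hk.
    rewrite !mmul_diagm_r by auto. cring.
Qed.

Lemma vN_entropy_cq_state d n P W : prob d P -> (forall z, (z < d)%nat -> state n (W z)) ->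
  (0 < n)%nat ->
  vN_entropy (d * n) (cq_state n P W) = shannon d P + rsum d (fun z => P z * vN_entropy n (W z)).
Proof.
  intros [hP hP1] HW hn.
  destruct (psd_family_decomp n d W (fun z hz => proj1 (HW z hz))) as [Us [Ls HD]].
  assert (Ls_sum : forall z, (z < d)%nat -> rsum n (Ls z) = 1).
  { intros z hz. pose proof (proj2 (HW z hz)) as T.
    rewrite (mtrace_spectral_decomp n _ _ _ (proj1 (HD z hz))) in T. injection T; auto. }
  assert (D := spectral_decomp_cq_state d n P W Us Ls hn (fun z hz => proj1 (HD z hz))).
  assert (G : psd (d * n) (cq_state n P W)).
  { eexists _, _. split; [exact D|]. intros i hi.
    apply Rmult_le_pos; [apply hP | apply HD]; auto using div_lt_pair, mod_lt_pair. }
  rewrite (vN_entropy_spectral _ _ _ _ G D), rsum_pair. unfold shannon.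
  rewrite (rsum_ext d (fun z => P z * vN_entropy n (W z)) (fun z => P z * - rsum n (fun k => xlnx (Ls z k))))
    by (intros z hz; f_equal; apply (vN_entropy_spectral n _ (Us z)); [apply HW | apply HD]; auto).
  rewrite <- rsum_opp, <- (rsum_opp d (fun z => P z * ln (P z))), <- rsum_add.
  apply rsum_ext; intros z hz.
  rewrite (rsum_ext _ _ (fun k => Ls z k * xlnx (P z) + P z * xlnx (Ls z k))).
  - rewrite rsum_add, rsum_mul_r, rsum_mul_l, Ls_sum by auto. unfold xlnx. ring.
  - intros k hk. rewrite pair_div, pair_mod by auto. apply xlnx_mul; [apply hP | apply HD]; auto.
Qed.

Lemma ptr1_cq_state d n P W : meq n (ptr1 d n (cq_state n P W)) (mixM d P W).
Proof.
  intros i j hi hj. unfold ptr1, mixM, cq_state. apply csum_ext; intros k hk.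
  rewrite !pair_div, !pair_mod, Nat.eqb_refl by auto. reflexivity.
Qed.

Lemma holevo_value_mixM d n W P : prob d P -> (forall z, (z < d)%nat -> state n (W z)) ->
  (0 < n)%nat ->
  shannon d P - cond_entropy d n W P =
  vN_entropy n (mixM d P W) - rsum d (fun z => P z * vN_entropy n (W z)).
Proof.
  intros HP HW hn. unfold cond_entropy.
  rewrite (vN_entropy_cq_state d n P W HP HW hn).
  rewrite (vN_entropy_meq n (mixM d P W) (ptr1 d n (cq_state n P W))).
  - ring.
  - apply psd_mixM; [apply HP | intros z hz; apply HW; auto].
  - apply meq_on_sym, ptr1_cq_state.
Qed.

(** * Holevo capacity of a symmetric channel *)

Section SymmetricChannel.
Variables (d n : nat) (W Us : nat -> Mat).
Hypotheses (hd : (0 < d)%nat) (HW : cq_channel d n W).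
Hypothesis HU : forall z, (z < d)%nat -> unitary n (Us z).
Hypothesis HS : forall z z', (z < d)%nat -> (z' < d)%nat ->
  meq n (mmul n (mmul n (Us z') (W z)) (adj (Us z'))) (W ((z + z') mod d)%nat).

Let W_state z : (z < d)%nat -> state n (W z).
Proof. intros. apply density_state, HW; auto. Qed.

Lemma vN_entropy_symmetric z : (z < d)%nat -> vN_entropy n (W z) = vN_entropy n (W O).
Proof.
  intros hz. rewrite <- (vN_entropy_unitary_conj n (W O) (Us z)) by (auto; apply W_state; auto).
  apply vN_entropy_meq.
  - apply psd_unitary_conj; auto. apply W_state; auto.
  - pose proof (HS O z hd hz) as E. rewrite Nat.mod_small in E by auto. exact E.
Qed.

Lemma mixM_unif_twirl P : prob d P ->
  meq n (mixM d (unif d) (fun x => mmul n (mmul n (Us x) (mixM d P W)) (adj (Us x))))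
    (mixM d (unif d) W).
Proof.
  intros [_ hP1] i j hi hj. rewrite <- (Cmul_1_l (mixM d (unif d) W i j)).
  change C1 with (RtoC 1). rewrite <- hP1, <- csum_RtoC, <- csum_mul_r. unfold mixM at 1.
  rewrite (csum_ext _ _ (fun x => csum d (fun z => Cmul (RtoC (P z))
      (Cmul (RtoC (unif d x)) (mmul n (mmul n (Us x) (W z)) (adj (Us x)) i j))))).
  2:{ intros x hx. rewrite mmul_mixM_r, mmul_mixM_l. unfold mixM.
      rewrite <- csum_mul_l. apply csum_ext; intros. cring. }
  rewrite csum_swap. apply csum_ext; intros z hz. rewrite csum_mul_l. f_equal. unfold mixM.
  rewrite <- (csum_rot d z (fun x => Cmul (RtoC (unif d x)) (W x i j)) hd).
  apply csum_ext; intros x hx. rewrite HS by auto. reflexivity.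
Qed.

Let holevo_value_symmetric P : prob d P ->
  shannon d P - cond_entropy d n W P = vN_entropy n (mixM d P W) - vN_entropy n (W O).
Proof.
  intros HP. rewrite holevo_value_mixM by (auto; try apply (state_dim_pos n (W O)), W_state; auto).
  rewrite (rsum_ext d _ (fun z => P z * vN_entropy n (W O)))
    by (intros; rewrite vN_entropy_symmetric; auto).
  rewrite rsum_mul_r, (proj2 HP). ring.
Qed.

Lemma holevo_capacity_symmetric :
  is_lub (holevo_values d n W) (vN_entropy n (mixM d (unif d) W) - vN_entropy n (W O)).
Proof.
  split.
  - intros r [P [HP ->]]. rewrite holevo_value_symmetric by auto.
    assert (Gmix : psd n (mixM d P W))
      by (apply psd_mixM; [apply HP | intros; apply W_state; auto]).
    rewrite (vN_entropy_meq _ _ _ (psd_mixM n d (unif d) _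
      (proj1 (prob_unif d hd)) (fun x hx => psd_unitary_conj n _ (Us x) Gmix (HU x hx)))
      (mixM_unif_twirl P HP)).
    pose proof (vN_entropy_concave n d (unif d)
      (fun x => mmul n (mmul n (Us x) (mixM d P W)) (adj (Us x))) (prob_unif d hd)
      (fun x hx => psd_unitary_conj n _ (Us x) Gmix (HU x hx))) as Hc.
    rewrite (rsum_ext d _ (fun x => unif d x * vN_entropy n (mixM d P W))), rsum_unif_const in Hc
      by (auto; intros; rewrite vN_entropy_unitary_conj; auto).
    lra.
  - intros b Hb. apply Hb. exists (unif d). split; [apply prob_unif; auto|].
    rewrite holevo_value_symmetric by (apply prob_unif; auto). reflexivity.
Qed.
End SymmetricChannel.

(** * Orthogonality of the characters of [Z_d] *)

Definition root_phase (d x c : nat) : C := Cexpi (2 * PI * INR x * INR c / INR d).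

Lemma root_phase_0 d c : root_phase d O c = C1.
Proof.
  unfold root_phase. simpl INR.
  replace (2 * PI * 0 * INR c / INR d) with 0 by (unfold Rdiv; ring). apply Cexpi_0.
Qed.

Lemma root_phase_add d x z c : Cmul (root_phase d x c) (root_phase d z c) = root_phase d (z + x) c.
Proof. unfold root_phase. rewrite Cexpi_add, plus_INR. f_equal. unfold Rdiv. ring. Qed.

Lemma root_phase_mod d x c : (0 < d)%nat -> root_phase d (x mod d) c = root_phase d x c.
Proof.
  intros hd. assert (0 < INR d) by (apply lt_0_INR; auto).
  unfold root_phase. rewrite (Nat.div_mod_eq x d) at 2.
  rewrite plus_INR, mult_INR.
  replace (2 * PI * (INR d * INR (x / d) + INR (x mod d)) * INR c / INR d)
    with (2 * PI * INR (x / d * c) + 2 * PI * INR (x mod d) * INR c / INR d)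
    by (rewrite mult_INR; field; lra).
  rewrite <- Cexpi_add, Cexpi_2PI_nat, Cmul_1_l. reflexivity.
Qed.

Lemma Cnorm2_root_phase d x c : Cnorm2 (root_phase d x c) = 1.
Proof. apply Cnorm2_Cexpi. Qed.

Lemma Cmul_eq0_l a w : Cmul a w = C0 -> Cnorm2 w <> 0 -> a = C0.
Proof.
  intros E nw. assert (E' : Cmul (Cmul a w) (Cconj w) = C0) by (rewrite E; cring).
  rewrite Cmul_assoc, Cmul_conj_r in E'. destruct a as [a1 a2].
  unfold Cmul, RtoC, C0 in E'; simpl in E'. injection E'; intros h2 h1.
  apply Ceq; simpl; nra.
Qed.

Lemma csum_Cexpi_geometric th N :
  Cmul (csum N (fun x => Cexpi (INR x * th))) (Cadd (Cexpi th) (RtoC (-1))) =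
  Cadd (Cexpi (INR N * th)) (RtoC (-1)).
Proof.
  induction N.
  - simpl. replace (0 * th) with 0 by ring. rewrite Cexpi_0. cring.
  - simpl csum. rewrite Cmul_add_l, IHN, S_INR.
    replace ((INR N + 1) * th) with (INR N * th + th) by ring. rewrite <- Cexpi_add. cring.
Qed.

Lemma Cnorm2_Cexpi_sub1 th : sin (th / 2) <> 0 -> Cnorm2 (Cadd (Cexpi th) (RtoC (-1))) <> 0.
Proof.
  intros hs. unfold Cnorm2; cunfold.
  replace th with (2 * (th / 2)) by field. rewrite cos_2a_sin, sin_2a.
  assert (sin (th / 2) * sin (th / 2) > 0) by (pose proof (Rsqr_pos_lt _ hs); unfold Rsqr in *; lra).
  pose proof (sin2_cos2 (th / 2)). unfold Rsqr in *. nra.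
Qed.

Lemma sin_frac_PI_neq0 k d : (0 < k < d)%nat -> sin (PI * INR k / INR d) <> 0.
Proof.
  intros hk. assert (0 < INR k) by (apply lt_0_INR; lia).
  assert (INR k < INR d) by (apply lt_INR; lia). pose proof PI_RGT_0.
  apply Rgt_not_eq, sin_gt_0.
  - apply Rdiv_lt_0_compat; nra.
  - apply Rmult_lt_reg_r with (INR d); [lra|]. unfold Rdiv.
    rewrite Rmult_assoc, Rinv_l by lra. nra.
Qed.

Lemma root_phase_orthogonal d c c' : (c < d)%nat -> (c' < d)%nat -> c <> c' ->
  csum d (fun x => Cmul (root_phase d x c) (Cconj (root_phase d x c'))) = C0.
Proof.
  intros hc hc' hne. assert (hD : 0 < INR d) by (apply lt_0_INR; lia).
  set (th := 2 * PI * (INR c - INR c') / INR d).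
  rewrite (csum_ext _ _ (fun x => Cexpi (INR x * th))).
  2:{ intros x hx. unfold root_phase. rewrite Cexpi_conj, Cexpi_add. f_equal. unfold th. field. lra. }
  apply (Cmul_eq0_l _ (Cadd (Cexpi th) (RtoC (-1)))).
  - rewrite csum_Cexpi_geometric.
    replace (INR d * th) with (2 * PI * INR c + - (2 * PI * INR c')) by (unfold th; field; lra).
    rewrite <- Cexpi_add, <- Cexpi_conj, !Cexpi_2PI_nat. cring.
  - apply Cnorm2_Cexpi_sub1.
    destruct (Nat.lt_ge_cases c' c) as [lt | ge].
    + replace (th / 2) with (PI * INR (c - c') / INR d)
        by (unfold th; rewrite minus_INR by lia; field; lra).
      apply sin_frac_PI_neq0; lia.
    + replace (th / 2) with (- (PI * INR (c' - c) / INR d))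
        by (unfold th; rewrite minus_INR by lia; field; lra).
      rewrite sin_neg. intros E. apply (sin_frac_PI_neq0 (c' - c) d); [lia | lra].
Qed.

(** * The dual channel *)

Lemma density_gram n r Y : mtrace n (mmul r Y (adj Y)) = C1 -> density n (mmul r Y (adj Y)).
Proof.
  intros T. split; [|split; [|exact T]].
  - intros i j hi hj. unfold mmul, adj. rewrite csum_conj. apply csum_ext; intros; cring.
  - intros v.
    set (w := fun k => csum n (fun i => Cmul (Cconj (v i)) (Y i k))).
    replace (csum n (fun i => csum n (fun j => Cmul (Cconj (v i)) (Cmul (mmul r Y (adj Y) i j) (v j)))))
      with (RtoC (rsum r (fun k => Cnorm2 (w k)))).
    + apply rsum_ge0; intros; apply Cnorm2_ge0.
    + rewrite <- csum_RtoC.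
      rewrite (csum_ext r _ (fun k => csum n (fun i => csum n (fun j =>
        Cmul (Cconj (v i)) (Cmul (Cmul (Y i k) (Cconj (Y j k))) (v j)))))).
      * rewrite csum_swap. apply csum_ext; intros i hi. rewrite csum_swap.
        apply csum_ext; intros j hj. unfold mmul, adj.
        rewrite <- csum_mul_r, <- csum_mul_l. apply csum_ext; intros; cring.
      * intros k hk. rewrite <- Cmul_conj_r. unfold w. rewrite csum_conj, <- csum_mul_r.
        apply csum_ext; intros i hi. rewrite <- csum_mul_l. apply csum_ext; intros; cring.
Qed.

Section DualChannel.
Variables (d n m : nat) (phi : nat -> Vec).
Hypotheses (hd : (0 < d)%nat) (hm : (0 < m)%nat).

Local Notation Wd := (dual_channel d n m phi).

(* [W^perp(x) = Y_x Y_x^*], where [Y_x] is [theta_x] reshaped into a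
   [(C^d (x) C^m) x C^n] matrix, [B = C^n] being the system traced out. *)
Definition dual_factor (x : nat) : Mat :=
  fun i k => theta d n m phi x (((i / m) * n + k) * m + i mod m)%nat.

Lemma dual_channel_gram x : Wd x = mmul n (dual_factor x) (adj (dual_factor x)).
Proof. reflexivity. Qed.

Lemma dual_factor_entry x i k : (k < n)%nat ->
  dual_factor x i k = Cmul (RtoC (/ sqrt (INR d)))
    (Cmul (root_phase d x (i / m)) (phi (i / m)%nat (k * m + i mod m)%nat)).
Proof.
  intros hk. unfold dual_factor, theta. cbv zeta.
  replace (((i / m) * n + k) * m + i mod m)%nat with ((i / m) * (n * m) + (k * m + i mod m))%nat
    by ring.
  assert (k * m + i mod m < n * m)%nat by (pose proof (mod_lt_pair i m hm); nia).
  rewrite pair_div, pair_mod by auto. reflexivity.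
Qed.

Lemma dual_factor_phase x i k : (k < n)%nat ->
  dual_factor x i k = Cmul (root_phase d x (i / m)) (dual_factor O i k).
Proof. intros hk. rewrite !dual_factor_entry, root_phase_0 by auto. cring. Qed.

Lemma dual_channel_phase x i j :
  Wd x i j = Cmul (root_phase d x (i / m)) (Cmul (Wd O i j) (Cconj (root_phase d x (j / m)))).
Proof.
  rewrite !dual_channel_gram. unfold mmul, adj. rewrite <- csum_mul_r, <- csum_mul_l.
  apply csum_ext; intros k hk. rewrite (dual_factor_phase x i k), (dual_factor_phase x j k) by auto.
  cring.
Qed.

Definition phase_op (x : nat) : Mat :=
  fun i j => if Nat.eqb i j then root_phase d x (i / m) else C0.

Lemma mmul_phase_op_l N x A i j : (i < N)%nat ->
  mmul N (phase_op x) A i j = Cmul (root_phase d x (i / m)) (A i j).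
Proof.
  intros hi. unfold mmul, phase_op.
  rewrite <- (csum_delta' N i (fun k => Cmul (root_phase d x (k / m)) (A k j))) by auto.
  apply csum_ext; intros k hk. destruct (Nat.eqb_spec i k); [subst; reflexivity | cring].
Qed.

Lemma mmul_phase_op_adj_r N x A i j : (j < N)%nat ->
  mmul N A (adj (phase_op x)) i j = Cmul (A i j) (Cconj (root_phase d x (j / m))).
Proof.
  intros hj. unfold mmul, adj, phase_op.
  rewrite <- (csum_delta N j (fun k => Cmul (A i k) (Cconj (root_phase d x (k / m))))) by auto.
  apply csum_ext; intros k hk.
  destruct (Nat.eqb_spec j k), (Nat.eqb_spec k j); try lia; [subst; reflexivity | cring].
Qed.

Lemma phase_op_unitary N x : unitary N (phase_op x).
Proof.
  split; intros i j hi hj.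
  - rewrite mmul_phase_op_adj_r by auto. unfold phase_op, idm.
    destruct (Nat.eqb_spec i j); [subst; rewrite Cmul_conj_r, Cnorm2_root_phase; reflexivity | cring].
  - unfold mmul, adj, phase_op, idm.
    rewrite <- (csum_delta N i (fun _ => if Nat.eqb i j then C1 else C0)) by auto.
    apply csum_ext; intros k hk.
    destruct (Nat.eqb_spec k i), (Nat.eqb_spec k j), (Nat.eqb_spec i j); subst; try lia; try cring.
    rewrite Cmul_conj_l, Cnorm2_root_phase. reflexivity.
Qed.

Lemma dual_channel_covariant N x z :
  meq N (mmul N (mmul N (phase_op x) (Wd z)) (adj (phase_op x))) (Wd (z + x)).
Proof.
  intros i j hi hj. rewrite mmul_phase_op_adj_r, mmul_phase_op_l by auto.
  rewrite (dual_channel_phase z i j), (dual_channel_phase (z + x) i j).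
  rewrite <- !root_phase_add, Cconj_mul. cring.
Qed.

Lemma dual_channel_symmetric : symmetric_channel d (d * m) Wd.
Proof.
  exists phase_op. split; [intros; apply phase_op_unitary|].
  intros z x hz hx i j hi hj. rewrite dual_channel_covariant by auto.
  rewrite (dual_channel_phase (z + x)), (dual_channel_phase ((z + x) mod d)), !root_phase_mod by auto.
  reflexivity.
Qed.
End DualChannel.

Lemma purification_dim_pos n m rho v : density n rho -> purification n m rho v -> (0 < m)%nat.
Proof.
  intros [_ [_ T]] HP. destruct m; [|lia].
  rewrite <- (mtrace_meq n _ _ HP) in T. unfold mtrace, ptr2 in T. simpl in T.
  rewrite csum_eq0 in T by reflexivity. injection T; lra.
Qed.

Section DualOfPurification.
Variables (d n m : nat) (W : nat -> Mat) (phi : nat -> Vec).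
Hypotheses (hd : (0 < d)%nat) (hm : (0 < m)%nat) (HW : cq_channel d n W).
Hypothesis HP : forall z, (z < d)%nat -> purification n m (W z) (phi z).

Local Notation Wd := (dual_channel d n m phi).

(* [phi c] reshaped into an [n x m] matrix, so that [W c = X X^*] and [Tr_B |phi c><phi c| = X^T conj X]. *)
Definition purification_factor (c : nat) : Mat := fun k e => phi c (k * m + e)%nat.

Lemma ptr2_outer_gram c :
  ptr2 n m (outer (phi c)) = mmul m (purification_factor c) (adj (purification_factor c)).
Proof. reflexivity. Qed.

Lemma ptr1_outer_gram c : ptr1 n m (outer (phi c)) =
  mmul n (trM (purification_factor c)) (adj (trM (purification_factor c))).
Proof. reflexivity. Qed.

Lemma dual_factor_transpose_gram :
  meq n (mmul (d * m) (trM (dual_factor d n m phi O)) (adj (trM (dual_factor d n m phi O))))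
    (mixM d (unif d) W).
Proof.
  assert (sq : / sqrt (INR d) * / sqrt (INR d) = / INR d).
  { assert (0 < INR d) by (apply lt_0_INR; auto).
    rewrite <- Rinv_mult, sqrt_sqrt by lra. reflexivity. }
  intros k l hk hl. unfold mmul at 1. rewrite csum_pair. unfold mixM. apply csum_ext; intros c hc.
  rewrite <- (HP c hc k l hk hl), ptr2_outer_gram. unfold mmul, unif.
  rewrite <- csum_mul_l. apply csum_ext; intros e he. unfold trM, adj, purification_factor.
  rewrite !dual_factor_entry, !pair_div, !pair_mod, root_phase_0, <- sq by auto. cring.
Qed.

Lemma mtrace_dual_channel x : mtrace (d * m) (Wd x) = C1.
Proof.
  transitivity (mtrace (d * m) (Wd O)).
  - apply csum_ext; intros i hi. rewrite dual_channel_phase by auto.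
    rewrite Cmul_comm, Cmul_assoc, Cmul_conj_l, Cnorm2_root_phase. cring.
  - rewrite dual_channel_gram, mtrace_gram_transpose, (mtrace_meq n _ _ dual_factor_transpose_gram).
    unfold mtrace, mixM. rewrite csum_swap.
    rewrite (csum_ext _ _ (fun c => RtoC (unif d c))), csum_RtoC, (proj2 (prob_unif d hd)); [reflexivity|].
    intros c hc. rewrite csum_mul_l.
    change (csum n (fun i => W c i i)) with (mtrace n (W c)). rewrite (proj2 (proj2 (HW c hc))). cring.
Qed.

Lemma dual_channel_cq : cq_channel d (d * m) Wd.
Proof. intros x hx. rewrite dual_channel_gram. apply density_gram, mtrace_dual_channel. Qed.

Lemma vN_entropy_dual_channel_0 : vN_entropy (d * m) (Wd O) = vN_entropy n (mixM d (unif d) W).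
Proof.
  rewrite dual_channel_gram, vN_entropy_gram_transpose. symmetry. apply vN_entropy_meq.
  - apply (gram_psd n (d * m) _ (trM (dual_factor d n m phi O))), meq_on_refl.
  - apply dual_factor_transpose_gram.
Qed.

(* [W^perp] averaged over [Z_d]: the coherences between different values of [C] cancel. *)
Definition dephased_purification : Mat :=
  cq_state m (unif d) (fun c => ptr1 n m (outer (phi c))).

Lemma mixM_unif_dual_channel : meq (d * m) (mixM d (unif d) Wd) dephased_purification.
Proof.
  intros i j hi hj. unfold mixM.
  rewrite (csum_ext _ _ (fun x => Cmul (Cmul (RtoC (/ INR d)) (Wd O i j))
      (Cmul (root_phase d x (i / m)) (Cconj (root_phase d x (j / m)))))).
  2:{ intros x hx. rewrite dual_channel_phase by auto. unfold unif. cring. }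
  rewrite csum_mul_l. unfold dephased_purification, cq_state.
  destruct (Nat.eqb_spec (i / m) (j / m)) as [e|e].
  - rewrite e.
    rewrite (csum_ext _ _ (fun _ => RtoC 1))
      by (intros; rewrite Cmul_conj_r, Cnorm2_root_phase; reflexivity).
    rewrite csum_RtoC, rsum_const, dual_channel_gram.
    assert (0 < INR d) by (apply lt_0_INR; auto).
    transitivity (mmul n (dual_factor d n m phi O) (adj (dual_factor d n m phi O)) i j);
      [apply Ceq; simpl; field; lra|].
    assert (sq : / sqrt (INR d) * / sqrt (INR d) = / INR d)
      by (rewrite <- Rinv_mult, sqrt_sqrt by lra; reflexivity).
    unfold mmul, adj, ptr1, outer, unif. rewrite <- csum_mul_l. apply csum_ext; intros k hk.
    rewrite !dual_factor_entry, !root_phase_0, <- sq, e by auto. cring.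
  - rewrite root_phase_orthogonal by (auto using div_lt_pair). cring.
Qed.

Lemma state_ptr1_outer c : (c < d)%nat -> state m (ptr1 n m (outer (phi c))).
Proof.
  intros hc. rewrite ptr1_outer_gram. split.
  - apply (gram_psd m n _ (trM (purification_factor c))), meq_on_refl.
  - rewrite <- mtrace_gram_transpose, <- ptr2_outer_gram, (mtrace_meq n _ _ (HP c hc)).
    apply (HW c hc).
Qed.

Lemma vN_entropy_dephased_purification :
  vN_entropy (d * m) dephased_purification =
  ln (INR d) + rsum d (fun c => unif d c * vN_entropy n (W c)).
Proof.
  unfold dephased_purification.
  rewrite vN_entropy_cq_state, shannon_unif by (auto using prob_unif, state_ptr1_outer).
  f_equal. apply rsum_ext; intros c hc. f_equal.
  rewrite ptr1_outer_gram, <- vN_entropy_gram_transpose, <- ptr2_outer_gram.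
  apply vN_entropy_meq; [apply density_psd, HW; auto | apply meq_on_sym, HP; auto].
Qed.
End DualOfPurification.

Theorem corollary4 (d n m : nat) (W : nat -> Mat) (phi : nat -> Vec) :
  (0 < d)%nat ->
  cq_channel d n W ->
  symmetric_channel d n W ->
  (forall z, (z < d)%nat -> purification n m (W z) (phi z)) ->
  exists I1 I2 : R,
    is_lub (holevo_values d n W) I1 /\
    is_lub (holevo_values d (d * m) (dual_channel d n m phi)) I2 /\
    I1 + I2 = ln (INR d).
Proof.
  intros hd HW [Us [HU HUW]] HP.
  assert (hm : (0 < m)%nat) by exact (purification_dim_pos n m (W O) (phi O) (HW O hd) (HP O hd)).
  set (Wd := dual_channel d n m phi).
  assert (HWd : cq_channel d (d * m) Wd) by exact (dual_channel_cq d n m W phi hd hm HW HP).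
  destruct (dual_channel_symmetric d n m phi hd hm) as [Vs [HV HVW]].
  exists (vN_entropy n (mixM d (unif d) W) - vN_entropy n (W O)),
         (vN_entropy (d * m) (mixM d (unif d) Wd) - vN_entropy (d * m) (Wd O)).
  split; [|split].
  - exact (holevo_capacity_symmetric d n W Us hd HW HU HUW).
  - exact (holevo_capacity_symmetric d (d * m) Wd Vs hd HWd HV HVW).
  - assert (Gmix : psd (d * m) (mixM d (unif d) Wd))
      by (apply psd_mixM; [apply prob_unif | intros; apply density_psd, HWd]; auto).
    rewrite <- (vN_entropy_meq _ _ _ Gmix (mixM_unif_dual_channel d n m phi hd hm)).
    unfold Wd. rewrite (vN_entropy_dephased_purification d n m W phi),
      (vN_entropy_dual_channel_0 d n m W phi) by auto.
    rewrite (rsum_ext d _ (fun c => unif d c * vN_entropy n (W O)))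
      by (intros; rewrite (vN_entropy_symmetric d n W Us); auto).
    rewrite rsum_unif_const by auto. ring.
Qed.
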